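(* In the setting described in the context, suppose there exists $(z_1,\dots,z_m)\in\boldsymbol{\mathcal H}$ with $-\big(\nabla_1\boldsymbol g_1(z_1,\dots,z_m),\dots,\nabla_m\boldsymbol g_m(z_1,\dots,z_m)\big)\in\partial\boldsymbol f(z_1,\dots,z_m)$, and there exists $\chi\in]0,+\infty[$ such that for all $(x_i),(y_i)\in\boldsymbol{\mathcal H}$, $$\sum_{i=1}^m\|\nabla_i\boldsymbol g_i(x_1,\dots,x_m)-\nabla_i\boldsymbol g_i(y_1,\dots,y_m)\|^2\le\chi^2\sum_{i=1}^m\|x_i-y_i\|^2.$$ Let $\varepsilon\in]0,1/(\chi+1)[$ and let $(\gamma_n)_{n\in\mathbb N}$ be a sequence in $[\varepsilon,(1-\varepsilon)/\chi]$. For every $i$, let $x_{i,0}\in\mathcal H_i$ and let $(a_{i,n})_n,(b_{i,n})_n,(c_{i,n})_n$ be absolutely summable sequences in $\mathcal H_i$. For every $n\in\mathbb N$ define $y_{i,n}=x_{i,n}-\gamma_n(\nabla_i\boldsymbol g_i(x_{1,n},\dots,x_{m,n})+a_{i,n})$ for $i=1,\dots,m$; $(p_{1,n},\dots,p_{m,n})=\operatorname{prox}_{\gamma_n\boldsymbol f}(y_{1,n},\dots,y_{m,n})+(b_{1,n},\dots,b_{m,n})$; $q_{i,n}=p_{i,n}-\gamma_n(\nabla_i\boldsymbol g_i(p_{1,n},\dots,p_{m,n})+c_{i,n})$ and $x_{i,n+1}=x_{i,n}-y_{i,n}+q_{i,n}$ for $i=1,\dots,m$. Then there exists a solution $(\overline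 x_1,\dots,\overline x_m)$ to Problem (P) such that for every $i$, $x_{i,n}\rightharpoonup\overline x_i$ and $p_{i,n}\rightharpoonup\overline x_i$.
   Context: Let $m\ge2$ be an integer and let $\mathcal H_1,\dots,\mathcal H_m$ be real Hilbert spaces. Let $\boldsymbol{\mathcal H}=\mathcal H_1\oplus\cdots\oplus\mathcal H_m$ with inner product $\sum_i\langle x_i,y_i\rangle$. $\Gamma_0(\mathcal K)$ denotes the proper lower semicontinuous convex functions $\mathcal K\to\left]-\infty,+\infty\right]$. Let $\boldsymbol f\in\Gamma_0(\boldsymbol{\mathcal H})$ with subdifferential $\partial\boldsymbol f$. For each $i$, $\boldsymbol g_i:\boldsymbol{\mathcal H}\to\left]-\infty,+\infty\right]$ is such that for every $(x_1,\dots,x_m)$, $x\mapsto\boldsymbol g_i(x_1,\dots,x_{i-1},x,x_{i+1},\dots,x_m)$ is convex and differentiable on $\mathcal H_i$, with gradient $\nabla_i\boldsymbol g_i(x_1,\dots,x_m)$ at $x_i$; and $\sum_i\langle\nabla_i\boldsymbol g_i(\boldsymbol x)-\nabla_i\boldsymbol g_i(\boldsymbol y),x_i-y_i\rangle\ge0$ for all $\boldsymbol x,\boldsymbol y\in\boldsymbol{\mathcal H}$. Problem (P): find $x_1\in\mathcal H_1,\dots,x_m\in\mathcal H_m$ such that for each $i$, $x_i\in\operatorname{Argmin}_{x\in\mathcal H_i}\big(\boldsymbol f(x_1,\dots,x_{i-1},x,x_{i+1},\dots,x_m)+\boldsymbol g_i(x_1,\dots,x_{i-1},x,x_{i+1},\dots,x_m)\big)$.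 For $\varphi\in\Gamma_0(\mathcal K)$, $\operatorname{prox}_\varphi x=\operatorname{argmin}_{y}\big(\varphi(y)+\tfrac12\|x-y\|^2\big)$. $\rightharpoonup$ denotes weak convergence. *)

From Stdlib Require Import Reals.
From mathcomp Require Import ssreflect ssrfun ssrbool eqtype ssrnat seq fintype bigop.

Set Implicit Arguments.
Unset Strict Implicit.

Open Scope R_scope.

Record RawIP := {
  car :> Type;
  vzero : car;
  vadd : car -> car -> car;
  vopp : car -> car;
  vscal : R -> car -> car;
  inner : car -> car -> R
}.
Arguments vzero {r}.
Arguments vadd {r} _ _.
Arguments vopp {r} _.
Arguments vscal {r} _ _.
Arguments inner {r} _ _.

Section Generic.
Variable V : RawIP.

Definition vsub (x y : V) : V := vadd x (vopp y).
Definition norm (x : V) : R := sqrt (inner x x).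

Definition hilbert_axioms : Prop :=
  (forall x y z : V, vadd x (vadd y z) = vadd (vadd x y) z) /\
  (forall x y : V, vadd x y = vadd y x) /\
  (forall x : V, vadd x vzero = x) /\
  (forall x : V, vadd x (vopp x) = vzero) /\
  (forall (a : R) (x y : V), vscal a (vadd x y) = vadd (vscal a x) (vscal a y)) /\
  (forall (a b : R) (x : V), vscal (a + b) x = vadd (vscal a x) (vscal b x)) /\
  (forall (a b : R) (x : V), vscal a (vscal b x) = vscal (a * b) x) /\
  (forall x : V, vscal 1 x = x) /\
  (forall x y : V, inner x y = inner y x) /\
  (forall x y z : V, inner (vadd x y) z = inner x z + inner y z) /\
  (forall (a : R) (x y : V), inner (vscal a x) y = a * inner x y) /\
  (forall x : V, 0 <= inner x x) /\
  (forall x : V, inner x x = 0 -> x = vzero) /\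
  (forall u : nat -> V,
     (forall eps, 0 < eps -> exists N, forall p q, (N <= p)%nat -> (N <= q)%nat ->
        norm (vsub (u p) (u q)) < eps) ->
     exists l : V, Un_cv (fun n => norm (vsub (u n) l)) 0).

Definition weak_cv (u : nat -> V) (l : V) : Prop :=
  forall z : V, Un_cv (fun n => inner (u n) z) (inner l z).

Definition abs_summable (u : nat -> V) : Prop :=
  exists M : R, forall N, sum_f_R0 (fun n => norm (u n)) N <= M.
End Generic.

Record HSpace := { hs_raw :> RawIP; hs_ax : hilbert_axioms hs_raw }.

Inductive ERbar := Fin (r : R) | PInf.

Definition ERle (a b : ERbar) : Prop :=
  match a, b with
  | _, PInf => True
  | PInf, Fin _ => False
  | Fin x, Fin y => x <= y
  end.

Definition ERlt (a b : ERbar) : Prop :=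
  match a, b with
  | Fin x, Fin y => x < y
  | Fin _, PInf => True
  | PInf, _ => False
  end.

Definition ERplus (a b : ERbar) : ERbar :=
  match a, b with
  | Fin x, Fin y => Fin (x + y)
  | _, _ => PInf
  end.

(* multiplication by a scalar t > 0 *)
Definition ERscal (t : R) (a : ERbar) : ERbar :=
  match a with Fin x => Fin (t * x) | PInf => PInf end.

Section Functions.
Variable V : RawIP.
Implicit Types (phi : V -> ERbar) (x y u : V).

Definition proper phi : Prop := exists x, phi x <> PInf.

Definition convex phi : Prop :=
  forall x y (t : R), 0 < t < 1 ->
    ERle (phi (vadd (vscal t x) (vscal (1 - t) y)))
         (ERplus (ERscal t (phi x)) (ERscal (1 - t) (phi y))).

Definition lsc phi : Prop :=
  forall x (xi : R), ERlt (Fin xi) (phi x) ->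
    exists delta, 0 < delta /\
      forall y, norm (vsub y x) < delta -> ERlt (Fin xi) (phi y).

Definition Gamma0 phi : Prop := proper phi /\ lsc phi /\ convex phi.

Definition subdiff phi x u : Prop :=
  forall y, ERle (ERplus (Fin (inner (vsub y x) u)) (phi x)) (phi y).

Definition is_minimizer phi x : Prop := forall y, ERle (phi x) (phi y).

Definition is_prox phi x p : Prop :=
  is_minimizer (fun y => ERplus (phi y) (Fin (/ 2 * (norm (vsub x y)) ^ 2))) p.

Definition has_gradient phi x u : Prop :=
  exists r, phi x = Fin r /\
    forall eps, 0 < eps -> exists delta, 0 < delta /\
      forall h : V, norm h < delta ->
        exists s, phi (vadd x h) = Fin s /\
          Rabs (s - r - inner h u) <= eps * norm h.
End Functions.

Definition sumI (m : nat) (F : 'I_m -> R) : R := \big[Rplus/0]_(i < m) F i.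

Definition prodRaw (m : nat) (H : 'I_m -> RawIP) : RawIP := {|
  car := forall i, H i;
  vzero := fun i => vzero;
  vadd := fun x y i => vadd (x i) (y i);
  vopp := fun x i => vopp (x i);
  vscal := fun a x i => vscal a (x i);
  inner := fun x y => sumI (fun i => inner (x i) (y i))
|}.

Definition prodH (m : nat) (H : 'I_m -> HSpace) : RawIP :=
  prodRaw (fun i => hs_raw (H i)).

Definition solves_P (m : nat) (H : 'I_m -> HSpace)
  (f : prodH H -> ERbar) (g : 'I_m -> prodH H -> ERbar) (xb : prodH H) : Prop :=
  forall i : 'I_m,
    is_minimizer (fun v : H i => ERplus (f (dfwith (xb : forall j, H j) v))
                                         (g i (dfwith (xb : forall j, H j) v)))
                 (xb i).

(* On the product H = H_1 + ... + H_m, B(x) = (grad_1 g_1(x), ..., grad_m g_m(x))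
   is monotone and chi-Lipschitz, and the iteration is Tseng's method with
   summable errors for 0 in df(x) + B(x).  Its iterates are quasi-Fejer with
   respect to the zeros of df + B, x_n - prox(y_n) -> 0, and by demiclosedness
   every weak cluster point is a zero; Opial's lemma gives weak convergence.
   A zero of df + B solves (P) by the gradient inequality for the convex
   partial maps of the g_i. *)

From Stdlib Require Import Reals Lra Lia Psatz ClassicalEpsilon Classical FunctionalExtensionality.
From mathcomp Require Import ssreflect.
From mathcomp Require ssrnat.
Open Scope R_scope.

Section HilbertAlgebra.
Context {V : HSpace}.
Implicit Types (x y z : V) (a : R).

Ltac hilbert_axiom V :=
  let ax := fresh "ax" in
  pose proof (hs_ax V) as ax; unfold hilbert_axioms in ax; decompose [and] ax; eauto.

Lemma vadd_assoc x y z : vadd x (vadd y z) = vadd (vadd x y) z.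
Proof. hilbert_axiom V. Qed.
Lemma vadd_comm x y : vadd x y = vadd y x.
Proof. hilbert_axiom V. Qed.
Lemma vadd_zero x : vadd x vzero = x.
Proof. hilbert_axiom V. Qed.
Lemma vadd_opp x : vadd x (vopp x) = vzero.
Proof. hilbert_axiom V. Qed.
Lemma inner_sym x y : inner x y = inner y x.
Proof. hilbert_axiom V. Qed.
Lemma inner_addl x y z : inner (vadd x y) z = inner x z + inner y z.
Proof. hilbert_axiom V. Qed.
Lemma inner_scall a x y : inner (vscal a x) y = a * inner x y.
Proof. hilbert_axiom V. Qed.
Lemma inner_pos x : 0 <= inner x x.
Proof. hilbert_axiom V. Qed.
Lemma inner_def x : inner x x = 0 -> x = vzero.
Proof. hilbert_axiom V. Qed.

(* Completeness, with the order on indices read in Peano arithmetic. *)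
Lemma hs_complete (u : nat -> V) :
  (forall e, 0 < e -> exists N, forall p q, (N <= p)%nat -> (N <= q)%nat ->
        norm (vsub (u p) (u q)) < e) ->
  exists l : V, Un_cv (fun n => norm (vsub (u n) l)) 0.
Proof.
  intro hu. have [_ [_ [_ [_ [_ [_ [_ [_ [_ [_ [_ [_ [_ hcomplete]]]]]]]]]]]]] := hs_ax V.
  apply hcomplete. intros e he. destruct (hu e he) as [N hN]. exists N.
  intros p q hp hq. apply hN; apply (ssrbool.elimT ssrnat.leP); assumption.
Qed.

Lemma inner_zerol z : inner (@vzero V) z = 0.
Proof. have h := inner_addl vzero vzero z. rewrite vadd_zero in h. lra. Qed.
Lemma inner_oppl x z : inner (vopp x) z = - inner x z.
Proof. have h := inner_addl x (vopp x) z. rewrite vadd_opp inner_zerol in h. lra. Qed.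
Lemma inner_subl x y z : inner (vsub x y) z = inner x z - inner y z.
Proof. unfold vsub. rewrite inner_addl inner_oppl. ring. Qed.
Lemma inner_addr x y z : inner z (vadd x y) = inner z x + inner z y.
Proof. rewrite !(inner_sym z). apply inner_addl. Qed.
Lemma inner_scalr a x y : inner y (vscal a x) = a * inner y x.
Proof. rewrite !(inner_sym y). apply inner_scall. Qed.
Lemma inner_zeror z : inner z (@vzero V) = 0.
Proof. rewrite inner_sym. apply inner_zerol. Qed.
Lemma inner_oppr x z : inner z (vopp x) = - inner z x.
Proof. rewrite !(inner_sym z). apply inner_oppl. Qed.
Lemma inner_subr x y z : inner z (vsub x y) = inner z x - inner z y.
Proof. rewrite !(inner_sym z). apply inner_subl. Qed.

(* Vectors are determined by their inner products; this reduces every vector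
   identity to an identity between real numbers. *)
Lemma vext x y : (forall z, inner x z = inner y z) -> x = y.
Proof.
  intro h.
  have hxy : vsub x y = vzero.
  { apply inner_def. rewrite inner_subl (h (vsub x y)). ring. }
  have ex : x = vadd (vsub x y) y.
  { unfold vsub. rewrite -vadd_assoc (vadd_comm (vopp y) y) vadd_opp vadd_zero. reflexivity. }
  rewrite ex hxy vadd_comm vadd_zero. reflexivity.
Qed.
End HilbertAlgebra.

Ltac vsimpl := repeat (rewrite ?inner_addl ?inner_scall ?inner_oppl ?inner_subl ?inner_zerol
   ?inner_addr ?inner_scalr ?inner_oppr ?inner_subr ?inner_zeror).
Ltac vring := apply vext; let z := fresh "z" in intro z; vsimpl; first [ring | field].

Section Norms.
Context {V : HSpace}.
Implicit Types (x y z : V) (a : R).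

Lemma norm_sq x : norm x ^ 2 = inner x x.
Proof. unfold norm. rewrite pow2_sqrt; [reflexivity | apply inner_pos]. Qed.
Lemma norm_nonneg x : 0 <= norm x.
Proof. unfold norm. apply sqrt_pos. Qed.

Lemma sq_le_le (r s : R) : 0 <= s -> r ^ 2 <= s ^ 2 -> r <= s.
Proof. intros hs h. destruct (Rle_lt_dec r s); auto. nra. Qed.
Lemma sq_lt_lt (r s : R) : 0 <= s -> r ^ 2 < s ^ 2 -> r < s.
Proof. intros hs h. destruct (Rlt_le_dec r s); auto. nra. Qed.

Lemma cauchy_schwarz x y : Rabs (inner x y) <= norm x * norm y.
Proof.
  have key : inner x y ^ 2 <= inner x x * inner y y.
  { destruct (Req_dec (inner y y) 0) as [e|e].
    - have -> : y = vzero by apply inner_def. rewrite !inner_zeror. lra.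
    - have p := inner_pos (vsub (vscal (inner y y) x) (vscal (inner x y) y)).
      revert p; vsimpl; rewrite (inner_sym y x); intro p.
      have py := inner_pos y.
      have : inner y y * (inner y y * inner x x - inner x y ^ 2) >= 0 by nra.
      nra. }
  rewrite -(norm_sq x) -(norm_sq y) in key.
  have nx := norm_nonneg x. have ny := norm_nonneg y.
  apply sq_le_le; [apply Rmult_le_pos; lra|].
  rewrite RPow_abs Rabs_right; [nra | apply Rle_ge, pow2_ge_0].
Qed.

Lemma inner_le x y : inner x y <= norm x * norm y.
Proof. have h := cauchy_schwarz x y. have := Rle_abs (inner x y). lra. Qed.
Lemma inner_ge x y : - (norm x * norm y) <= inner x y.
Proof.
  have h := cauchy_schwarz x y. have h2 := Rle_abs (- inner x y).
  rewrite Rabs_Ropp in h2. lra.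
Qed.

Lemma norm_of_sq x (r : R) : 0 <= r -> inner x x = r ^ 2 -> norm x = r.
Proof. intros hr h. unfold norm. rewrite h. apply sqrt_pow2; auto. Qed.
Lemma norm_eq_inner x y : inner x x = inner y y -> norm x = norm y.
Proof. intro h. unfold norm. rewrite h. reflexivity. Qed.
Lemma norm_scal a x : norm (vscal a x) = Rabs a * norm x.
Proof.
  apply norm_of_sq; [apply Rmult_le_pos; [apply Rabs_pos | apply norm_nonneg]|].
  vsimpl. rewrite Rpow_mult_distr norm_sq pow2_abs. ring.
Qed.
Lemma norm_opp x : norm (vopp x) = norm x.
Proof. apply norm_eq_inner. vsimpl. ring. Qed.
Lemma norm_sub_sym x y : norm (vsub x y) = norm (vsub y x).
Proof. apply norm_eq_inner. vsimpl. rewrite (inner_sym x y). ring. Qed.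

Lemma norm_sq_add x y : norm (vadd x y) ^ 2 = norm x ^ 2 + 2 * inner x y + norm y ^ 2.
Proof. rewrite !norm_sq. vsimpl. rewrite (inner_sym y x). ring. Qed.
Lemma norm_sq_sub x y : norm (vsub x y) ^ 2 = norm x ^ 2 - 2 * inner x y + norm y ^ 2.
Proof. rewrite !norm_sq. vsimpl. rewrite (inner_sym y x). ring. Qed.

Lemma norm_triangle x y : norm (vadd x y) <= norm x + norm y.
Proof.
  have h1 := norm_nonneg x. have h2 := norm_nonneg y.
  apply sq_le_le; [lra|]. rewrite norm_sq_add. have := inner_le x y. nra.
Qed.
Lemma norm_sub_le x y : norm (vsub x y) <= norm x + norm y.
Proof. unfold vsub. rewrite -(norm_opp y). apply norm_triangle. Qed.
Lemma norm_sub_tri x y z : norm (vsub x z) <= norm (vsub x y) + norm (vsub y z).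
Proof. replace (vsub x z) with (vadd (vsub x y) (vsub y z)) by vring. apply norm_triangle. Qed.
End Norms.

Lemma small_inv (e : R) : 0 < e -> exists N, forall n, (n >= N)%nat -> / (INR n + 1) < e.
Proof.
  intro he. destruct (archimed_cor1 e he) as [N [h1 h2]]. exists N. intros n hn.
  apply Rle_lt_trans with (/ INR N); auto.
  apply Rinv_le_contravar; [apply lt_0_INR; lia|].
  have : INR N <= INR n by apply le_INR; lia. lra.
Qed.

Lemma cv_ext (u v : nat -> R) l : (forall n, u n = v n) -> Un_cv u l -> Un_cv v l.
Proof. intros h hu e he. destruct (hu e he) as [N hN]. exists N. intros n hn. rewrite -h. auto. Qed.

Lemma cv_const (c : R) : Un_cv (fun _ => c) c.
Proof. intros e he. exists O. intros. unfold Rdist. rewrite Rminus_diag Rabs_R0. lra. Qed.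

Lemma cv_scal (u : nat -> R) a l : Un_cv u l -> Un_cv (fun n => a * u n) (a * l).
Proof. intro h. apply CV_mult; auto. apply cv_const. Qed.

Lemma cv_shift (u : nat -> R) l : Un_cv u l -> Un_cv (fun n => u (S n)) l.
Proof. intros hu e he. destruct (hu e he) as [N hN]. exists N. intros n hn. apply hN. lia. Qed.

Lemma cv_squeeze (u v w : nat -> R) l :
  (forall n, u n <= v n <= w n) -> Un_cv u l -> Un_cv w l -> Un_cv v l.
Proof.
  intros h hu hw e he. destruct (hu e he) as [N1 h1]. destruct (hw e he) as [N2 h2].
  exists (N1 + N2)%nat. intros n hn.
  specialize (h1 n ltac:(lia)). specialize (h2 n ltac:(lia)). specialize (h n).
  unfold Rdist in *. apply Rabs_def2 in h1. apply Rabs_def2 in h2. apply Rabs_def1; lra.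
Qed.

Lemma cv_squeeze0 (u v : nat -> R) : (forall n, 0 <= u n <= v n) -> Un_cv v 0 -> Un_cv u 0.
Proof. intros h hv. apply (cv_squeeze (fun _ => 0) u v); auto. apply cv_const. Qed.

Lemma cv_le_lim (u : nat -> R) l M : (forall n, u n <= M) -> Un_cv u l -> l <= M.
Proof. intros h hu. apply (Rle_cv_lim h hu). apply cv_const. Qed.

Lemma cv_pow2 (u : nat -> R) l : Un_cv u l -> Un_cv (fun n => u n ^ 2) (l ^ 2).
Proof.
  intro h. apply (cv_ext (fun n => u n * u n)); [intro; ring|].
  replace (l ^ 2) with (l * l) by ring. apply CV_mult; auto.
Qed.

Lemma sq_to0 (t : nat -> R) : (forall n, 0 <= t n) -> Un_cv (fun n => t n ^ 2) 0 -> Un_cv t 0.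
Proof.
  intros h0 h e he. destruct (h (e ^ 2) ltac:(nra)) as [N hN]. exists N. intros n hn.
  specialize (hN n hn). specialize (h0 n). unfold Rdist in *. rewrite Rminus_0_r in hN |- *.
  rewrite Rabs_right in hN; [|apply Rle_ge; nra]. rewrite Rabs_right; [|lra].
  apply sq_lt_lt; lra.
Qed.

Lemma cv_bounded (u : nat -> R) l : Un_cv u l -> exists M, forall n, u n <= M.
Proof.
  intro h. destruct (maj_by_pos u (exist _ l h)) as [M [_ hM]]. exists M.
  intro n. have := Rle_abs (u n). have := hM n. lra.
Qed.

Lemma leq_eps (r : R) : (forall e, 0 < e -> r <= e) -> r <= 0.
Proof. intro h. destruct (Rle_lt_dec r 0); auto. specialize (h (r / 2) ltac:(lra)). lra. Qed.

(* The form in which first-order optimality conditions are obtained: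
   if r <= t s for every t in ]0,1[, then r <= 0. *)
Lemma leq_t (r s : R) : (forall t, 0 < t < 1 -> r <= t * s) -> r <= 0.
Proof.
  intro h. destruct (Rle_lt_dec r 0); auto.
  set (t := r / (2 * (Rabs s + r))).
  have hs := Rabs_pos s. have hs2 := Rle_abs s.
  have ht : 0 < t < 1.
  { unfold t. split; [apply Rdiv_lt_0_compat; lra|].
    apply Rmult_lt_reg_r with (2 * (Rabs s + r)); [lra|].
    unfold Rdiv. rewrite Rmult_assoc Rinv_l; lra. }
  specialize (h t ht).
  have : t * s <= t * Rabs s by apply Rmult_le_compat_l; lra.
  have : t * (2 * (Rabs s + r)) = r by unfold t; field; lra.
  nra.
Qed.

Definition sincr (phi : nat -> nat) : Prop := forall n, (phi n < phi (S n))%nat.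

Lemma sincr_ge phi : sincr phi -> forall n, (n <= phi n)%nat.
Proof. intros h n. induction n; [lia|]. specialize (h n). lia. Qed.

Lemma sincr_lt phi : sincr phi -> forall i j, (i < j)%nat -> (phi i < phi j)%nat.
Proof.
  intros h i j hij. induction j; [lia|].
  destruct (Nat.eq_dec i j) as [->|ne]; [apply h|].
  specialize (h j). specialize (IHj ltac:(lia)). lia.
Qed.

Lemma sincr_comp phi psi : sincr phi -> sincr psi -> sincr (fun n => phi (psi n)).
Proof. intros h1 h2 n. apply sincr_lt; auto. Qed.

Lemma cv_subseq (u : nat -> R) l phi : sincr phi -> Un_cv u l -> Un_cv (fun n => u (phi n)) l.
Proof.
  intros hp hu e he. destruct (hu e he) as [N hN]. exists N. intros n hn.
  apply hN. have := sincr_ge phi hp n. lia.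
Qed.

Lemma build_seq (P : nat -> nat -> Prop) :
  (forall N k, exists p, (N <= p)%nat /\ P k p) -> exists th, sincr th /\ forall k, P k (th k).
Proof.
  intro h. set (g := fun N k => proj1_sig (constructive_indefinite_description _ (h N k))).
  have hg : forall N k, (N <= g N k)%nat /\ P k (g N k).
  { intros N k. unfold g. destruct (constructive_indefinite_description _ (h N k)). auto. }
  set (th := fix th k := match k with O => g O O | S k' => g (S (th k')) (S k') end).
  exists th. split.
  - intro n. change (th (S n)) with (g (S (th n)) (S n)). have := proj1 (hg (S (th n)) (S n)). lia.
  - intro k. destruct k; apply hg.
Qed.

Lemma cv_of_subsubseq (u : nat -> R) l :
  (forall th, sincr th -> exists phi, sincr phi /\ Un_cv (fun k => u (th (phi k))) l) ->
  Un_cv u l.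
Proof.
  intro h. apply NNPP. intro hn.
  have [e [he hfar]] : exists e, 0 < e /\ forall N, exists n, (N <= n)%nat /\ e <= Rabs (u n - l).
  { apply NNPP. intro hne. apply hn. intros e he. apply NNPP. intro hne2. apply hne.
    exists e. split; auto. intro N. apply NNPP. intro hne3. apply hne2. exists N.
    intros n hnN. apply Rnot_le_lt. intro hle. apply hne3. exists n. split; auto. }
  destruct (build_seq (fun _ n => e <= Rabs (u n - l))) as [th [hth hthP]].
  { intros N k. destruct (hfar N) as [n hnN]. exists n. exact hnN. }
  destruct (h th hth) as [phi [_ hphi]].
  destruct (hphi e he) as [N hN]. specialize (hN N (le_n _)). specialize (hthP (phi N)).
  unfold Rdist in hN. lra.
Qed.

Section VectorSequences.
Context {V : HSpace}.

Definition strong_cv (u : nat -> V) (l : V) : Prop := Un_cv (fun n => norm (vsub (u n) l)) 0.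

Lemma inner_bounded_0 (u v : nat -> V) M :
  (forall n, norm (u n) <= M) -> Un_cv (fun n => norm (v n)) 0 ->
  Un_cv (fun n => inner (u n) (v n)) 0.
Proof.
  intros hM hv. apply (cv_squeeze (fun n => - (M * norm (v n))) _ (fun n => M * norm (v n))).
  - intro n. have := cauchy_schwarz (u n) (v n). have := Rmult_le_compat_r _ _ _ (norm_nonneg (v n)) (hM n).
    have := Rle_abs (inner (u n) (v n)). have := Rle_abs (- inner (u n) (v n)). rewrite Rabs_Ropp. lra.
  - replace 0 with (- (M * 0)) by ring. apply CV_opp. apply cv_scal. auto.
  - replace 0 with (M * 0) by ring. apply cv_scal. auto.
Qed.

Lemma weak_close (u v : nat -> V) l :
  weak_cv u l -> Un_cv (fun n => norm (vsub (u n) (v n))) 0 -> weak_cv v l.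
Proof.
  intros hu hd z.
  apply (cv_ext (fun n => inner (u n) z - inner z (vsub (u n) (v n)))).
  { intro n. vsimpl. rewrite !(inner_sym z). ring. }
  replace (inner l z) with (inner l z - 0) by ring. apply CV_minus; [apply hu|].
  apply (inner_bounded_0 (fun _ => z)) with (norm z); [intro; lra | auto].
Qed.
End VectorSequences.

(** * Projections onto closed convex sets *)

Section Projection.
Context {V : HSpace}.

Definition closedS (C : V -> Prop) : Prop :=
  forall (u : nat -> V) l, (forall n, C (u n)) -> strong_cv u l -> C l.
Definition convexS (C : V -> Prop) : Prop :=
  forall a b t, C a -> C b -> 0 <= t <= 1 -> C (vadd (vscal t a) (vscal (1 - t) b)).
Definition subspaceS (C : V -> Prop) : Prop :=
  C vzero /\ (forall a b, C a -> C b -> C (vadd a b)) /\ (forall t a, C a -> C (vscal t a)).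

(* Parallelogram law: if the midpoint of a and b is at least d long while a
   and b are at most d + s and d + t long, then a and b are close. *)
Lemma parallelogram_bound (a b : V) d s t :
  0 <= s -> 0 <= t -> 0 <= d -> d <= norm (vadd (vscal (1/2) a) (vscal (1/2) b)) ->
  norm a <= d + s -> norm b <= d + t ->
  norm (vsub b a) ^ 2 <= 2 * (2 * d * s + s ^ 2) + 2 * (2 * d * t + t ^ 2).
Proof.
  intros hs ht hd hmid ha hb.
  have hsq : d ^ 2 <= norm (vadd (vscal (1/2) a) (vscal (1/2) b)) ^ 2 by apply pow_incr; lra.
  rewrite norm_sq_add !norm_scal inner_scall inner_scalr Rabs_right in hsq; [|lra].
  rewrite norm_sq_sub (inner_sym b a).
  have hna := norm_nonneg a. have hnb := norm_nonneg b.
  have : norm a ^ 2 <= (d + s) ^ 2 by apply pow_incr; lra.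
  have : norm b ^ 2 <= (d + t) ^ 2 by apply pow_incr; lra.
  nra.
Qed.

Lemma dist_inf (C : V -> Prop) (w : V) : (exists c0, C c0) ->
  exists d, 0 <= d /\ (forall c, C c -> d <= norm (vsub w c)) /\
    (forall e, 0 < e -> exists c, C c /\ norm (vsub w c) < d + e).
Proof.
  intros [c0 hc0].
  set (E := fun r => exists c, C c /\ r = - norm (vsub w c)).
  have hb : bound E.
  { exists 0. intros r [c [_ ->]]. have := norm_nonneg (vsub w c). lra. }
  destruct (completeness E hb (ex_intro _ _ (ex_intro _ c0 (conj hc0 eq_refl)))) as [sup [hub hlub]].
  have hlow : forall c, C c -> - sup <= norm (vsub w c).
  { intros c hc. have := hub _ (ex_intro _ c (conj hc eq_refl)). lra. }
  exists (- sup). split; [|split; auto].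
  - have : sup <= 0; [|lra].
    apply hlub. intros r [c [_ ->]]. have := norm_nonneg (vsub w c). lra.
  - intros e he. apply NNPP. intro hn.
    have : sup <= sup - e; [|lra].
    apply hlub. intros r [c [hc ->]].
    destruct (Rlt_le_dec (norm (vsub w c)) (- sup + e)) as [hlt|hle]; [|lra].
    exfalso; apply hn; exists c; auto.
Qed.

Lemma minimizing_cauchy (C : V -> Prop) (w : V) (u : nat -> V) d :
  convexS C -> 0 <= d -> (forall c, C c -> d <= norm (vsub w c)) ->
  (forall n, C (u n) /\ norm (vsub w (u n)) < d + / (INR n + 1)) ->
  forall e, 0 < e -> exists N, forall p q, (N <= p)%nat -> (N <= q)%nat ->
    norm (vsub (u p) (u q)) < e.
Proof.
  intros hcv hd hlow hu e he.
  set (k := Rmin 1 (e ^ 2 / (8 * d + 5))).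
  have hk : 0 < k by apply Rmin_pos; [lra | apply Rdiv_lt_0_compat; nra].
  have hk1 : k <= 1 := Rmin_l _ _.
  have hke : (8 * d + 5) * k <= e ^ 2.
  { have : k <= e ^ 2 / (8 * d + 5) := Rmin_r _ _.
    have : (8 * d + 5) * (e ^ 2 / (8 * d + 5)) = e ^ 2 by field; lra. nra. }
  destruct (small_inv k hk) as [N hN]. exists N. intros p q hp hq.
  destruct (hu p) as [hcp hdp]. destruct (hu q) as [hcq hdq].
  have hip : 0 < / (INR p + 1) by apply Rinv_0_lt_compat; have := pos_INR p; lra.
  have hiq : 0 < / (INR q + 1) by apply Rinv_0_lt_compat; have := pos_INR q; lra.
  have hkp := hN p hp. have hkq := hN q hq.
  have hmid := hlow _ (hcv _ _ (1/2) hcp hcq ltac:(lra)).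
  replace (vsub w (vadd (vscal (1/2) (u p)) (vscal (1 - 1/2) (u q))))
    with (vadd (vscal (1/2) (vsub w (u p))) (vscal (1/2) (vsub w (u q)))) in hmid by vring.
  have hpar := parallelogram_bound _ _ _ _ _ (Rlt_le _ _ hip) (Rlt_le _ _ hiq) hd hmid
                 (Rlt_le _ _ hdp) (Rlt_le _ _ hdq).
  replace (vsub (vsub w (u q)) (vsub w (u p))) with (vsub (u p) (u q)) in hpar by vring.
  apply sq_lt_lt; [lra|]. nra.
Qed.

Lemma proj_min (C : V -> Prop) (w : V) :
  (exists c0, C c0) -> closedS C -> convexS C ->
  exists p, C p /\ forall c, C c -> norm (vsub w p) <= norm (vsub w c).
Proof.
  intros hne hcl hcv. destruct (dist_inf C w hne) as [d [hd [hlow happ]]].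
  have hch : forall n : nat, exists c, C c /\ norm (vsub w c) < d + / (INR n + 1).
  { intro n. apply happ. apply Rinv_0_lt_compat. have := pos_INR n. lra. }
  set (u := fun n => proj1_sig (constructive_indefinite_description _ (hch n))).
  have hu : forall n, C (u n) /\ norm (vsub w (u n)) < d + / (INR n + 1).
  { intro n. unfold u. destruct (constructive_indefinite_description _ (hch n)). auto. }
  destruct (hs_complete u (minimizing_cauchy C w u d hcv hd hlow hu)) as [p hp].
  exists p. split; [apply (hcl u p); [intro n; apply hu | exact hp]|].
  intros c hc. have : norm (vsub w p) <= d; [|have := hlow c hc; lra].
  apply Rminus_le. apply leq_eps. intros e he.
  destruct (hp (e / 2) ltac:(lra)) as [N1 h1].
  destruct (small_inv (e / 2) ltac:(lra)) as [N2 h2].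
  specialize (h1 (N1 + N2)%nat ltac:(lia)). specialize (h2 (N1 + N2)%nat ltac:(lia)).
  unfold Rdist in h1. rewrite Rminus_0_r Rabs_right in h1; [|apply Rle_ge, norm_nonneg].
  have := proj2 (hu (N1 + N2)%nat). have := norm_sub_tri w (u (N1 + N2)%nat) p. lra.
Qed.

(* The nearest point is characterised by the variational inequality
   <w - p, c - p> <= 0 on C. *)
Lemma proj_exists (C : V -> Prop) (w : V) :
  (exists c0, C c0) -> closedS C -> convexS C ->
  exists p, C p /\ forall c, C c -> inner (vsub w p) (vsub c p) <= 0.
Proof.
  intros hne hcl hcv. destruct (proj_min C w hne hcl hcv) as [p [hp hmin]].
  exists p. split; auto. intros c hc.
  set (a := vsub w p). set (b := vsub c p).
  apply (leq_t _ (norm b ^ 2 / 2)). intros t ht.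
  specialize (hmin _ (hcv c p t hc hp ltac:(lra))).
  replace (vsub w (vadd (vscal t c) (vscal (1 - t) p))) with (vsub a (vscal t b)) in hmin
    by (unfold a, b; vring).
  have hsq : norm a ^ 2 <= norm (vsub a (vscal t b)) ^ 2
    by apply pow_incr; split; [apply norm_nonneg | exact hmin].
  rewrite norm_sq_sub norm_scal inner_scalr Rabs_right in hsq; [|lra].
  have h : t * (2 * inner a b) <= t * (t * norm b ^ 2) by nra.
  apply Rmult_le_reg_l in h; lra.
Qed.

Lemma subspace_sub (C : V -> Prop) : subspaceS C -> forall a b, C a -> C b -> C (vsub a b).
Proof.
  intros [h0 [ha hs]] a b hA hB. replace (vsub a b) with (vadd a (vscal (-1) b)) by vring. auto.
Qed.

Lemma proj_subspace (C : V -> Prop) (w : V) :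
  subspaceS C -> closedS C -> exists p, C p /\ forall c, C c -> inner (vsub w p) c = 0.
Proof.
  intros hs hcl. have [h0 [ha hsc]] := hs.
  have hcv : convexS C by intros x y t hx hy _; apply ha; apply hsc.
  destruct (proj_exists C w (ex_intro _ vzero h0) hcl hcv) as [p [hp hv]].
  exists p. split; auto. intros c hc.
  have h1 := hv (vadd p c) (ha _ _ hp hc).
  have h2 := hv (vadd p (vscal (-1) c)) (ha _ _ hp (hsc _ _ hc)).
  replace (vsub (vadd p c) p) with c in h1 by vring.
  replace (vsub (vadd p (vscal (-1) c)) p) with (vscal (-1) c) in h2 by vring.
  rewrite inner_scalr in h2. lra.
Qed.
End Projection.

Section Riesz.
Context {V : HSpace}.
Variables (D : V -> Prop) (L : V -> R) (M : R).
Hypotheses (hD : subspaceS D) (hDc : closedS D) (hM : 0 <= M)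
  (hLadd : forall a b, D a -> D b -> L (vadd a b) = L a + L b)
  (hLscal : forall t a, D a -> L (vscal t a) = t * L a)
  (hLbnd : forall v, D v -> Rabs (L v) <= M * norm v).

Lemma riesz_sub a b : D a -> D b -> L (vsub a b) = L a - L b.
Proof.
  intros ha hb. have hs := hD. destruct hs as [_ [_ hsc]].
  replace (vsub a b) with (vadd a (vscal (-1) b)) by vring.
  rewrite hLadd ?hLscal; auto. ring.
Qed.

Lemma riesz_zero : L vzero = 0.
Proof.
  have [hD0 _] := hD.
  have -> : @vzero V = vscal 0 vzero by vring.
  rewrite hLscal //. ring.
Qed.

Lemma riesz_kernel_closed : closedS (fun v => D v /\ L v = 0).
Proof.
  intros u l hu hul. have hDl : D l by apply (hDc u l); [intro n; apply hu | auto].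
  split; auto. destruct (Req_dec (L l) 0) as [|hne]; [auto | exfalso].
  have hpos : 0 < Rabs (L l) by have := Rabs_no_R0 _ hne; have := Rabs_pos (L l); lra.
  suff : Rabs (L l) <= 0 by lra.
  apply leq_eps. intros e he.
  destruct (hul (e / (M + 1))) as [n0 hn0]; [apply Rdiv_lt_0_compat; lra|].
  specialize (hn0 n0 (le_n _)). unfold Rdist in hn0.
  rewrite Rminus_0_r Rabs_right in hn0; [|apply Rle_ge, norm_nonneg].
  destruct (hu n0) as [hu1 hu2].
  have hb := hLbnd _ (subspace_sub D hD _ _ hu1 hDl).
  rewrite riesz_sub // hu2 Rminus_0_l Rabs_Ropp in hb.
  have : M * norm (vsub (u n0) l) <= M * (e / (M + 1)) by apply Rmult_le_compat_l; lra.
  have : M * (e / (M + 1)) <= e.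
  { apply Rmult_le_reg_r with (M + 1); [lra|]. unfold Rdiv. field_simplify; lra. }
  lra.
Qed.

(* If L vanishes on D take
   0; otherwise the component e of some v0 orthogonal to the kernel of L
   spans the orthogonal complement of the kernel in D. *)
Lemma riesz_subspace : exists xb, D xb /\ forall v, D v -> inner xb v = L v.
Proof.
  have [hD0 [hDa hDs]] := hD.
  destruct (classic (forall v, D v -> L v = 0)) as [hall|hnall].
  { exists vzero. split; auto. intros v hv. rewrite inner_zerol hall; auto. }
  apply not_all_ex_not in hnall. destruct hnall as [v0 hv0].
  apply imply_to_and in hv0. destruct hv0 as [hDv0 hLv0].
  set (K := fun v => D v /\ L v = 0).
  have hKs : subspaceS K.
  { split; [|split].
    - split; [auto | apply riesz_zero].
    - intros a b [ha1 ha2] [hb1 hb2]. split; auto. rewrite hLadd; auto. lra.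
    - intros t a [ha1 ha2]. split; auto. rewrite hLscal // ha2. ring. }
  destruct (proj_subspace K v0 hKs riesz_kernel_closed) as [p0 [[hp0D hp0L] hp0]].
  set (e := vsub v0 p0).
  have hDe : D e by apply subspace_sub.
  have hLe : L e = L v0 by unfold e; rewrite riesz_sub //; lra.
  have hee : 0 < inner e e.
  { destruct (inner_pos e) as [h|h]; auto. symmetry in h. apply inner_def in h.
    exfalso. apply hLv0. rewrite -hLe h. apply riesz_zero. }
  exists (vscal (L e / inner e e) e). split; auto.
  intros v hv.
  have hc : K (vsub v (vscal (L v / L e) e)).
  { split; [apply subspace_sub; auto|].
    rewrite riesz_sub; [|auto|auto]. rewrite hLscal //. field. lra. }
  specialize (hp0 _ hc). fold e in hp0. clearbody e. revert hp0. vsimpl. intro hp0.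
  replace (inner e v) with (L v / L e * inner e e) by lra. field. split; lra.
Qed.
End Riesz.

(** * Weak sequential compactness *)

Lemma bw_extract (v : nat -> R) M : (forall n, Rabs (v n) <= M) ->
  exists th, sincr th /\ exists l, Un_cv (fun n => v (th n)) l.
Proof.
  intro hM.
  destruct (Bolzano_Weierstrass v (fun c => -M <= c <= M) (compact_P3 (-M) M)) as [l hl].
  { intro n. have := hM n. have := Rle_abs (v n). have := Rle_abs (- v n). rewrite Rabs_Ropp. lra. }
  have hn : forall N k, exists p, (N <= p)%nat /\ Rabs (v p - l) < / (INR k + 1).
  { intros N k. have hpos : 0 < / (INR k + 1) by apply Rinv_0_lt_compat; have := pos_INR k; lra.
    destruct (hl (fun y => Rabs (y - l) < / (INR k + 1)) N) as [p [hp1 hp2]].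
    { exists (mkposreal _ hpos). intros y hy. exact hy. }
    exists p. auto. }
  destruct (build_seq _ hn) as [th [hth hk]]. exists th. split; auto. exists l.
  intros e he. destruct (small_inv e he) as [N hN]. exists N. intros n hn'.
  unfold Rdist. eapply Rlt_trans; [apply hk | apply hN; auto].
Qed.

(* A canonical choice of such an extraction (the identity if v is unbounded). *)
Definition bw_select (v : nat -> R) : nat -> nat :=
  match excluded_middle_informative (exists M, forall n, Rabs (v n) <= M) with
  | left hb => proj1_sig (constructive_indefinite_description _
                 (bw_extract v _ (proj2_sig (constructive_indefinite_description _ hb))))
  | right _ => fun n => n
  end.

Lemma bw_select_spec (v : nat -> R) M : (forall n, Rabs (v n) <= M) ->
  sincr (bw_select v) /\ exists l, Un_cv (fun n => v (bw_select v n)) l.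
Proof.
  intro h. unfold bw_select. destruct excluded_middle_informative as [hb|hn].
  - destruct constructive_indefinite_description as [th hth]. exact hth.
  - exfalso. apply hn. exists M. exact h.
Qed.

(* Iterated extraction: nested_extract s j makes s 0, ..., s j converge. *)
Fixpoint nested_extract (s : nat -> nat -> R) (j : nat) : nat -> nat :=
  match j with
  | O => bw_select (s O)
  | S j' => fun n => nested_extract s j' (bw_select (fun m => s (S j') (nested_extract s j' m)) n)
  end.

Lemma diagonal (s : nat -> nat -> R) (M : nat -> R) :
  (forall j n, Rabs (s j n) <= M j) ->
  exists phi, sincr phi /\ forall j, exists l, Un_cv (fun k => s j (phi k)) l.
Proof.
  intro hM.
  set (T := fun j => bw_select (fun m => s (S j) (nested_extract s j m))).
  have hT : forall j, sincr (T j) /\ exists l, Un_cv (fun n => s (S j) (nested_extract s j (T j n))) l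
    by intro j; apply (bw_select_spec (fun m => s (S j) (nested_extract s j m)) (M (S j))); auto.
  have hinc : forall j, sincr (nested_extract s j).
  { induction j as [|j IH]; [exact (proj1 (bw_select_spec (s O) (M O) (hM O)))|].
    exact (sincr_comp _ _ IH (proj1 (hT j))). }
  have hcv : forall j, exists l, Un_cv (fun n => s j (nested_extract s j n)) l.
  { intros [|j]; [exact (proj2 (bw_select_spec (s O) (M O) (hM O))) | exact (proj2 (hT j))]. }
  (* later extractions are subsequences of earlier ones *)
  have hsub : forall j k, (j <= k)%nat -> exists rho : nat -> nat, (forall n, (n <= rho n)%nat) /\
                 forall n, nested_extract s k n = nested_extract s j (rho n).
  { intros j k hjk. induction k as [|k IH].
    - have -> : j = O by lia. exists (fun n => n). split; auto.
    - destruct (Nat.eq_dec j (S k)) as [->|ne]; [exists (fun n => n); split; auto|].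
      destruct IH as [rho [hr1 hr2]]; [lia|].
      exists (fun n => rho (T k n)). split.
      + intro n. have := sincr_ge _ (proj1 (hT k)) n. have := hr1 (T k n). lia.
      + intro n. apply hr2. }
  exists (fun k => nested_extract s k k). split.
  - intro k. change (nested_extract s (S k) (S k)) with (nested_extract s k (T k (S k))).
    apply sincr_lt; [apply hinc|]. have := sincr_ge _ (proj1 (hT k)) (S k). lia.
  - intro j. destruct (hcv j) as [l hl]. exists l.
    intros e he. destruct (hl e he) as [N hN]. exists (N + j)%nat. intros k hk.
    destruct (hsub j k ltac:(lia)) as [rho [hr1 hr2]]. rewrite hr2. apply hN.
    have := hr1 k. lia.
Qed.

Section WeakLimit.
Context {V : HSpace}.
Variables (y : nat -> V) (M : R).
Hypotheses (hyM : forall k, norm (y k) <= M)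
  (hyy : forall j, exists l, Un_cv (fun k => inner (y k) (y j)) l).

Definition cvdom (v : V) : Prop := exists l, Un_cv (fun k => inner (y k) v) l.

Lemma inner_y_bound v k : Rabs (inner (y k) v) <= M * norm v.
Proof.
  eapply Rle_trans; [apply cauchy_schwarz|].
  apply Rmult_le_compat_r; [apply norm_nonneg | auto].
Qed.

Lemma cvdom_subspace : subspaceS cvdom.
Proof.
  split; [|split].
  - exists 0. apply (cv_ext (fun _ => 0)); [intro; rewrite inner_zeror; auto | apply cv_const].
  - intros a b [la ha] [lb hb]. exists (la + lb).
    apply (cv_ext (fun k => inner (y k) a + inner (y k) b)); [intro; rewrite inner_addr; auto|].
    apply CV_plus; auto.
  - intros t a [la ha]. exists (t * la).
    apply (cv_ext (fun k => t * inner (y k) a)); [intro; rewrite inner_scalr; auto|].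
    apply cv_scal; auto.
Qed.

(* cvdom is closed: the inner products against a limit form a Cauchy sequence. *)
Lemma cvdom_closed : closedS cvdom.
Proof.
  intros u l hu hul.
  have hM0 : 0 <= M by have := hyM O; have := norm_nonneg (y O); lra.
  destruct (R_complete (fun k => inner (y k) l)) as [L hL]; [|exists L; exact hL].
  intros e he.
  destruct (hul (e / (4 * (M + 1)))) as [n0 hn0]; [apply Rdiv_lt_0_compat; lra|].
  specialize (hn0 n0 (le_n _)). unfold Rdist in hn0.
  rewrite Rminus_0_r Rabs_right in hn0; [|apply Rle_ge, norm_nonneg].
  destruct (hu n0) as [Lu hLu].
  destruct (hLu (e / 4)) as [N hN]; [lra|].
  exists N. intros k k' hk hk'. unfold Rdist.
  have h1 := hN k hk. have h2 := hN k' hk'. unfold Rdist in h1, h2.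
  have ek : forall j, inner (y j) l = inner (y j) (u n0) - inner (y j) (vsub (u n0) l)
    by intro; vsimpl; ring.
  rewrite !ek.
  have b1 := inner_y_bound (vsub (u n0) l) k. have b2 := inner_y_bound (vsub (u n0) l) k'.
  have : M * norm (vsub (u n0) l) <= M * (e / (4 * (M + 1))) by apply Rmult_le_compat_l; lra.
  have : M * (e / (4 * (M + 1))) <= e / 4.
  { apply Rmult_le_reg_r with (4 * (M + 1)); [lra|]. unfold Rdiv. field_simplify; lra. }
  apply Rabs_def2 in h1. apply Rabs_def2 in h2.
  have := Rle_abs (inner (y k) (vsub (u n0) l)). have := Rle_abs (- inner (y k) (vsub (u n0) l)).
  have := Rle_abs (inner (y k') (vsub (u n0) l)). have := Rle_abs (- inner (y k') (vsub (u n0) l)).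
  rewrite !Rabs_Ropp. intros. apply Rabs_def1; lra.
Qed.

Definition cvlim (v : V) : R :=
  match excluded_middle_informative (cvdom v) with
  | left h => proj1_sig (constructive_indefinite_description _ h)
  | right _ => 0
  end.

Lemma cvlim_spec v : cvdom v -> Un_cv (fun k => inner (y k) v) (cvlim v).
Proof.
  intro hv. unfold cvlim. destruct excluded_middle_informative as [h|h]; [|contradiction].
  destruct constructive_indefinite_description as [l hl]. exact hl.
Qed.

Lemma weak_limit_exists : exists xb, weak_cv y xb.
Proof.
  have hs := cvdom_subspace. have [hD0 [hDa hDs]] := hs.
  have hM0 : 0 <= M by have := hyM O; have := norm_nonneg (y O); lra.
  destruct (riesz_subspace cvdom cvlim M hs cvdom_closed hM0) as [xb [hDxb hxb]].
  - intros a b ha hb. apply (UL_sequence (fun k => inner (y k) (vadd a b))); [apply cvlim_spec; auto|].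
    apply (cv_ext (fun k => inner (y k) a + inner (y k) b)); [intro; rewrite inner_addr; auto|].
    apply CV_plus; apply cvlim_spec; auto.
  - intros t a ha. apply (UL_sequence (fun k => inner (y k) (vscal t a))); [apply cvlim_spec; auto|].
    apply (cv_ext (fun k => t * inner (y k) a)); [intro; rewrite inner_scalr; auto|].
    apply cv_scal; apply cvlim_spec; auto.
  - intros v hv. apply (cv_le_lim (fun k => Rabs (inner (y k) v))); [intro; apply inner_y_bound|].
    apply cv_cvabs. apply cvlim_spec; auto.
  - (* y lies in cvdom, so inner (y k) w = inner (y k) (P w) for the projection P w of w *)
    exists xb. intro w.
    destruct (proj_subspace cvdom w hs cvdom_closed) as [pw [hDpw hpw]].
    have hperp : forall v, cvdom v -> inner v w = inner v pw.
    { intros v hv. have := hpw v hv. vsimpl. rewrite (inner_sym w v) (inner_sym pw v). lra. }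
    apply (cv_ext (fun k => inner (y k) pw)); [intro k; rewrite hperp //; apply hyy|].
    rewrite hperp // hxb //. apply cvlim_spec; auto.
Qed.
End WeakLimit.

Lemma weak_compact {V : HSpace} (x : nat -> V) M : (forall n, norm (x n) <= M) ->
  exists phi, sincr phi /\ exists xb, weak_cv (fun k => x (phi k)) xb.
Proof.
  intro hM.
  destruct (diagonal (fun j n => inner (x n) (x j)) (fun j => M * norm (x j))) as [phi [hphi hlim]].
  { intros j n. eapply Rle_trans; [apply cauchy_schwarz|].
    apply Rmult_le_compat_r; [apply norm_nonneg | auto]. }
  exists phi. split; auto.
  apply (weak_limit_exists _ M); [intro; apply hM | intro j; apply hlim].
Qed.

(** * Convex analysis *)

Tactic Notation "ersimpl" := cbn [ERplus ERscal ERle ERlt].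
Tactic Notation "ersimpl" "in" hyp(h) := cbn [ERplus ERscal ERle ERlt] in h.
Tactic Notation "ersimpl" "in" "*" := cbn [ERplus ERscal ERle ERlt] in *.

Section ConvexAnalysis.
Context {V : HSpace}.
Implicit Types (f : V -> ERbar).

Lemma proper_fin f : proper f -> exists w r, f w = Fin r.
Proof. intros [w hw]. destruct (f w) as [r|] eqn:E; [eauto | contradiction]. Qed.

Lemma subdiff_fin f x u y r : subdiff f x u -> f y = Fin r -> exists s, f x = Fin s.
Proof.
  intros h hy. specialize (h y). rewrite hy in h.
  destruct (f x) as [s|]; [eauto | contradiction].
Qed.

Lemma subdiff_ineq f x u y r s :
  subdiff f x u -> f x = Fin r -> f y = Fin s -> s >= r + inner (vsub y x) u.
Proof. intros h hx hy. specialize (h y). rewrite hx hy in h. ersimpl in h. lra. Qed.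

Lemma subdiff_mono f x u y v r s :
  subdiff f x u -> subdiff f y v -> f x = Fin r -> f y = Fin s ->
  0 <= inner (vsub x y) (vsub u v).
Proof.
  intros hu hv hx hy. have h1 := subdiff_ineq f x u y r s hu hx hy.
  have h2 := subdiff_ineq f y v x s r hv hy hx.
  revert h1 h2. vsimpl. rewrite (inner_sym x v) (inner_sym y v). lra.
Qed.

(* r = prox_{gam f} y lies in dom f and (y - r) / gam is a subgradient of f
   at r: compare r with the points of the segment [r, w]. *)
Lemma prox_subdiff f (gam : R) (y r : V) :
  0 < gam -> proper f -> convex f -> is_prox (fun z => ERscal gam (f z)) y r ->
  (exists s, f r = Fin s) /\ subdiff f r (vscal (/ gam) (vsub y r)).
Proof.
  intros hg hp hc hpr.
  have [s hs] : exists s, f r = Fin s.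
  { destruct (proper_fin f hp) as [w0 [r0 h0]]. specialize (hpr w0). ersimpl in hpr.
    rewrite h0 in hpr. destruct (f r) as [s|]; [eauto | contradiction]. }
  split; [eauto|].
  intro w. rewrite hs. destruct (f w) as [fw|] eqn:Ew; ersimpl; auto.
  set (a := vsub y r). set (b := vsub w r).
  have key : gam * s - gam * fw + inner a b <= 0.
  { apply (leq_t _ (norm b ^ 2 / 2)). intros t ht.
    specialize (hc w r t ht). rewrite Ew hs in hc.
    specialize (hpr (vadd (vscal t w) (vscal (1 - t) r))). ersimpl in hpr. rewrite hs in hpr.
    destruct (f (vadd (vscal t w) (vscal (1 - t) r))) as [fwt|]; ersimpl in hc; ersimpl in hpr; [|contradiction].
    replace (vsub y (vadd (vscal t w) (vscal (1 - t) r))) with (vsub a (vscal t b)) in hpr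
      by (unfold a, b; vring).
    fold a in hpr. rewrite norm_sq_sub norm_scal inner_scalr Rabs_right in hpr; [|lra].
    have : gam * fwt <= gam * (t * fw + (1 - t) * s) by apply Rmult_le_compat_l; lra.
    have h2 : t * (gam * s - gam * fw + inner a b) <= t * (t * (norm b ^ 2 / 2)) by nra.
    apply Rmult_le_reg_l in h2; lra. }
  rewrite inner_scalr (inner_sym b a).
  have hinv : 0 < / gam by apply Rinv_0_lt_compat.
  have : / gam * (gam * s - gam * fw + inner a b) <= 0 by nra.
  replace (/ gam * (gam * s - gam * fw + inner a b)) with (s - fw + / gam * inner a b)
    by (field; lra).
  lra.
Qed.

Lemma prox_nonexp f (gam : R) y1 r1 y2 r2 s1 s2 :
  0 < gam -> subdiff f r1 (vscal (/ gam) (vsub y1 r1)) ->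
  subdiff f r2 (vscal (/ gam) (vsub y2 r2)) ->
  f r1 = Fin s1 -> f r2 = Fin s2 -> norm (vsub r1 r2) <= norm (vsub y1 y2).
Proof.
  intros hg h1 h2 e1 e2. have hm := subdiff_mono f _ _ _ _ _ _ h1 h2 e1 e2.
  replace (vsub (vscal (/ gam) (vsub y1 r1)) (vscal (/ gam) (vsub y2 r2)))
    with (vscal (/ gam) (vsub (vsub y1 y2) (vsub r1 r2))) in hm by vring.
  rewrite inner_scalr inner_subr in hm.
  have hg' : 0 < / gam by apply Rinv_0_lt_compat.
  have hx : norm (vsub r1 r2) ^ 2 <= inner (vsub r1 r2) (vsub y1 y2)
    by rewrite norm_sq; nra.
  have hc := inner_le (vsub r1 r2) (vsub y1 y2).
  have n1 := norm_nonneg (vsub r1 r2). have n2 := norm_nonneg (vsub y1 y2).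
  nra.
Qed.

(* A closed convex set is weakly sequentially closed: the projection p of a
   weak limit vb satisfies ||vb - p||^2 <= 0 in the limit. *)
Lemma weak_closed_convex (C : V -> Prop) (v : nat -> V) (vb : V) N :
  closedS C -> convexS C -> weak_cv v vb -> (forall k, (k >= N)%nat -> C (v k)) -> C vb.
Proof.
  intros hcl hcv hw hvC.
  destruct (proj_exists C vb (ex_intro _ (v N) (hvC N (le_n _))) hcl hcv) as [p [hp hpv]].
  have hle : inner (vsub vb p) (vsub vb p) <= 0.
  { apply (cv_le_lim (fun k => inner (vsub (v (k + N)%nat) p) (vsub vb p))).
    - intro k. rewrite inner_sym. apply hpv. apply hvC. lia.
    - apply (cv_ext (fun k => inner (v (k + N)%nat) (vsub vb p) - inner p (vsub vb p)));
        [intro; vsimpl; ring|].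
      rewrite inner_subl. apply CV_minus; [|apply cv_const].
      intros e he. destruct (hw (vsub vb p) e he) as [M hM]. exists M. intros n hn. apply hM. lia. }
  have h0 : vsub vb p = vzero by apply inner_def; have := inner_pos (vsub vb p); lra.
  replace vb with (vadd (vsub vb p) p) by vring. rewrite h0. replace (vadd vzero p) with p by vring.
  exact hp.
Qed.

Lemma sublevel_closed f eta : lsc f -> closedS (fun w => ERle (f w) (Fin eta)).
Proof.
  intros hl u l hu hul. destruct (Rlt_le_dec eta (match f l with Fin r => r | PInf => eta + 1 end))
    as [hlt|hle].
  - exfalso.
    destruct (hl l eta) as [delta [hd hdl]]; [destruct (f l); ersimpl in *; auto|].
    destruct (hul delta hd) as [n hn]. specialize (hn n (le_n _)).
    unfold Rdist in hn. rewrite Rminus_0_r Rabs_right in hn; [|apply Rle_ge, norm_nonneg].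
    specialize (hdl _ hn). specialize (hu n). destruct (f (u n)); ersimpl in *; lra.
  - destruct (f l); ersimpl in *; lra.
Qed.

Lemma sublevel_convex f eta : convex f -> convexS (fun w => ERle (f w) (Fin eta)).
Proof.
  intros hc a b t ha hb ht.
  destruct (Req_dec t 0) as [->|e0].
  { replace (vadd (vscal 0 a) (vscal (1 - 0) b)) with b by vring. auto. }
  destruct (Req_dec t 1) as [->|e1].
  { replace (vadd (vscal 1 a) (vscal (1 - 1) b)) with a by vring. auto. }
  specialize (hc a b t ltac:(lra)).
  destruct (f a) as [fa|]; destruct (f b) as [fb|]; ersimpl in *; try contradiction.
  destruct (f (vadd (vscal t a) (vscal (1 - t) b))); ersimpl in *; [nra | contradiction].
Qed.

Lemma weak_lsc f (v : nat -> V) (vb : V) (F : nat -> R) xi :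
  lsc f -> convex f -> weak_cv v vb -> (forall k, ERle (f (v k)) (Fin (F k))) -> Un_cv F xi ->
  ERle (f vb) (Fin xi).
Proof.
  intros hl hc hw hF hcv.
  have heta : forall eta, xi < eta -> ERle (f vb) (Fin eta).
  { intros eta he. destruct (hcv (eta - xi)) as [N hN]; [lra|].
    apply (weak_closed_convex _ v vb N (sublevel_closed f eta hl) (sublevel_convex f eta hc) hw).
    intros k hk. specialize (hN k hk). unfold Rdist in hN. apply Rabs_def2 in hN.
    specialize (hF k). destruct (f (v k)); ersimpl in *; lra. }
  destruct (f vb) as [fv|] eqn:E; ersimpl.
  - apply Rnot_lt_le. intro hlt. specialize (heta ((fv + xi) / 2) ltac:(lra)). ersimpl in heta. lra.
  - specialize (heta (xi + 1) ltac:(lra)). ersimpl in heta. auto.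
Qed.

(* Minty-type characterisation: if f(w) >= f(xb) + <xb - w, B w> on dom f with
   B Lipschitz, then -B xb is a subgradient of f at xb (test along segments). *)
Lemma minty f (B : V -> V) (chi : R) (xb : V) (fx : R) :
  convex f -> (forall x y, norm (vsub (B x) (B y)) <= chi * norm (vsub x y)) ->
  f xb = Fin fx ->
  (forall w s, f w = Fin s -> s >= fx + inner (vsub xb w) (B w)) ->
  subdiff f xb (vopp (B xb)).
Proof.
  intros hc hB hx hw y. rewrite hx. destruct (f y) as [fy|] eqn:Ey; ersimpl; auto.
  set (b := vsub y xb).
  have key : fx - fy - inner b (B xb) <= 0.
  { apply (leq_t _ (chi * norm b ^ 2)). intros t ht.
    specialize (hc y xb t ht). rewrite Ey hx in hc.
    set (wt := vadd (vscal t y) (vscal (1 - t) xb)) in *.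
    destruct (f wt) as [fwt|] eqn:Ewt; ersimpl in hc; [|contradiction].
    specialize (hw wt fwt Ewt).
    replace (vsub xb wt) with (vscal (- t) b) in hw by (unfold wt, b; vring).
    rewrite inner_scall in hw.
    have hl := hB wt xb.
    replace (vsub wt xb) with (vscal t b) in hl by (unfold wt, b; vring).
    rewrite norm_scal Rabs_right in hl; [|lra].
    have hb0 := norm_nonneg b.
    have hci := inner_le b (vsub (B wt) (B xb)).
    have hbb : inner b (B wt) <= inner b (B xb) + chi * (t * norm b) * norm b.
    { have : inner b (B wt) = inner b (B xb) + inner b (vsub (B wt) (B xb)) by vsimpl; ring.
      have : norm b * norm (vsub (B wt) (B xb)) <= norm b * (chi * (t * norm b))
        by apply Rmult_le_compat_l; lra.
      nra. }
    have h3 : t * (fx - fy - inner b (B xb)) <= t * (t * (chi * norm b ^ 2)) by nra.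
    apply Rmult_le_reg_l in h3; lra. }
  rewrite inner_oppr. fold b. lra.
Qed.

Lemma grad_ineq (phi : V -> ERbar) x u : convex phi -> has_gradient phi x u -> subdiff phi x u.
Proof.
  intros hc [r0 [hx hd]] y. rewrite hx. destruct (phi y) as [s|] eqn:Ey; ersimpl; auto.
  set (d := vsub y x). have nd := norm_nonneg d.
  (* first-order expansion at x along d, compared with the convexity bound *)
  have key : forall e, 0 < e -> inner d u + r0 <= s + e * norm d.
  { intros e he. destruct (hd e he) as [del [hdel hh]].
    set (t := Rmin (1/2) (del / (2 * (norm d + 1)))).
    have ht : 0 < t < 1.
    { have h1 : t <= 1/2 := Rmin_l _ _.
      have h0 : 0 < t by apply Rmin_pos; [lra | apply Rdiv_lt_0_compat; lra]. lra. }
    have htd : t * norm d < del.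
    { have h1 : t <= del / (2 * (norm d + 1)) := Rmin_r _ _.
      have : t * norm d <= del / (2 * (norm d + 1)) * norm d by apply Rmult_le_compat_r; lra.
      have : del / (2 * (norm d + 1)) * norm d * (2 * (norm d + 1)) = del * norm d by field; lra.
      have : 0 < / (2 * (norm d + 1)) by apply Rinv_0_lt_compat; lra.
      nra. }
    have hnh : norm (vscal t d) < del by rewrite norm_scal Rabs_right; lra.
    destruct (hh _ hnh) as [s' [hs' hbnd]].
    specialize (hc y x t ht). rewrite Ey hx in hc. ersimpl in hc.
    replace (vadd (vscal t y) (vscal (1 - t) x)) with (vadd x (vscal t d)) in hc by (unfold d; vring).
    rewrite hs' in hc. ersimpl in hc.
    rewrite inner_scall norm_scal (Rabs_right t) in hbnd; [|lra].
    have hb2 := Rle_abs (- (s' - r0 - t * inner d u)). rewrite Rabs_Ropp in hb2.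
    have h3 : t * (inner d u + r0 - s - e * norm d) <= 0 by nra.
    destruct (Rle_lt_dec (inner d u + r0 - s - e * norm d) 0); [lra | nra]. }
  apply Rminus_le. apply leq_eps. intros e he.
  specialize (key (e / (norm d + 1)) ltac:(apply Rdiv_lt_0_compat; lra)).
  have : e / (norm d + 1) * norm d <= e.
  { apply Rmult_le_reg_r with (norm d + 1); [lra|].
    replace (e / (norm d + 1) * norm d * (norm d + 1)) with (e * norm d) by (field; lra). nra. }
  lra.
Qed.
End ConvexAnalysis.

Fixpoint psum (e : nat -> R) (n : nat) : R :=
  match n with O => 0 | S n => psum e n + e n end.

Definition bounded_sums (e : nat -> R) : Prop := exists M, forall n, psum e n <= M.

Lemma psum_nonneg (e : nat -> R) n : (forall k, 0 <= e k) -> 0 <= psum e n.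
Proof. intro h. induction n as [|n IH]; simpl; [lra|]. have := h n. lra. Qed.

Lemma term_le_psum (e : nat -> R) n : (forall k, 0 <= e k) -> e n <= psum e (S n).
Proof. intro h. simpl. have := psum_nonneg e n h. lra. Qed.

Lemma psum_scal (e : nat -> R) K n : psum (fun k => K * e k) n = K * psum e n.
Proof. induction n as [|n IH]; simpl; [ring | rewrite IH; ring]. Qed.

Lemma abs_summable_sums {V : RawIP} (a : nat -> V) :
  abs_summable a -> bounded_sums (fun k => norm (a k)).
Proof.
  intros [M hM]. exists (Rmax M 0). intros [|n]; [apply Rmax_r|].
  have -> : psum (fun k => norm (a k)) (S n) = sum_f_R0 (fun k => norm (a k)) n.
  { induction n as [|n IH]; [simpl; ring | simpl in *; rewrite IH; reflexivity]. }
  eapply Rle_trans; [apply hM | apply Rmax_l].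
Qed.

Lemma bounded_sums_comb (e1 e2 e3 : nat -> R) K : 0 <= K ->
  bounded_sums e1 -> bounded_sums e2 -> bounded_sums e3 ->
  bounded_sums (fun k => K * (e1 k + e2 k + e3 k)).
Proof.
  intros hK [M1 h1] [M2 h2] [M3 h3]. exists (K * (M1 + M2 + M3)). intro n.
  have -> : psum (fun k => K * (e1 k + e2 k + e3 k)) n = K * (psum e1 n + psum e2 n + psum e3 n).
  { induction n as [|n IH]; simpl; [ring | rewrite IH; ring]. }
  apply Rmult_le_compat_l; [lra|]. have := h1 n. have := h2 n. have := h3 n. lra.
Qed.

Lemma growing_bounded_cv (u : nat -> R) M :
  (forall n, u n <= u (S n)) -> (forall n, u n <= M) -> exists l, Un_cv u l.
Proof.
  intros h1 h2. destruct (growing_cv u h1) as [l hl]; [|exists l; auto].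
  exists M. intros x [i ->]. auto.
Qed.

Lemma psum_cv (e : nat -> R) : (forall n, 0 <= e n) -> bounded_sums e -> exists l, Un_cv (psum e) l.
Proof.
  intros h0 [M hM]. apply (growing_bounded_cv _ M); auto. intro n. simpl. have := h0 n. lra.
Qed.

Lemma summable_to0 (e : nat -> R) : (forall n, 0 <= e n) -> bounded_sums e -> Un_cv e 0.
Proof.
  intros h0 hM. destruct (psum_cv e h0 hM) as [l hl].
  apply (cv_ext (fun n => psum e (S n) - psum e n)); [intro; simpl; ring|].
  replace 0 with (l - l) by ring. apply CV_minus; [apply cv_shift|]; auto.
Qed.

Lemma quasi_fejer_cv (al e : nat -> R) : (forall n, 0 <= e n) -> bounded_sums e ->
  (forall n, 0 <= al n) -> (forall n, al (S n) <= al n + e n) -> exists l, Un_cv al l.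
Proof.
  intros he hsum hal hs. have [M hM] := hsum.
  destruct (psum_cv e he hsum) as [ls hls].
  destruct (growing_bounded_cv (fun n => psum e n - al n) M) as [lb hlb].
  - intro n. simpl. have := hs n. lra.
  - intro n. have := hM n. have := hal n. lra.
  - exists (ls - lb). apply (cv_ext (fun n => psum e n - (psum e n - al n))); [intro; ring|].
    apply CV_minus; auto.
Qed.

Lemma quasi_fejer_bound (al e : nat -> R) :
  (forall n, al (S n) <= al n + e n) -> forall n, al n <= al O + psum e n.
Proof. intros hs n. induction n as [|n IH]; simpl; [lra|]. have := hs n. lra. Qed.

(** * Opial's lemma *)

Section Opial.
Context {V : HSpace}.

(* Two weak cluster points z1, z2 of x from which the distances of x converge
   coincide: <x_n, z1 - z2> converges, and its limit is both <z1, z1 - z2>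
   and <z2, z1 - z2>. *)
Lemma opial_unique (x : nat -> V) phi1 phi2 z1 z2 L1 L2 :
  sincr phi1 -> sincr phi2 ->
  Un_cv (fun n => norm (vsub (x n) z1)) L1 -> Un_cv (fun n => norm (vsub (x n) z2)) L2 ->
  weak_cv (fun k => x (phi1 k)) z1 -> weak_cv (fun k => x (phi2 k)) z2 -> z1 = z2.
Proof.
  intros hp1 hp2 hL1 hL2 hw1 hw2.
  set (lam := (inner z1 z1 - inner z2 z2 - (L1 ^ 2 - L2 ^ 2)) * / 2).
  have hcv : Un_cv (fun n => inner (x n) (vsub z1 z2)) lam.
  { apply (cv_ext (fun n => (inner z1 z1 - inner z2 z2
              - (norm (vsub (x n) z1) ^ 2 - norm (vsub (x n) z2) ^ 2)) * / 2)).
    - intro n. rewrite !norm_sq. vsimpl. rewrite (inner_sym z1 (x n)) (inner_sym z2 (x n)). field.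
    - apply CV_mult; [|apply cv_const]. apply CV_minus; [apply cv_const|].
      apply CV_minus; apply cv_pow2; auto. }
  have h1 : inner z1 (vsub z1 z2) = lam.
  { apply (UL_sequence (fun k => inner (x (phi1 k)) (vsub z1 z2))); [apply hw1|].
    apply (cv_subseq (fun n => inner (x n) (vsub z1 z2))); auto. }
  have h2 : inner z2 (vsub z1 z2) = lam.
  { apply (UL_sequence (fun k => inner (x (phi2 k)) (vsub z1 z2))); [apply hw2|].
    apply (cv_subseq (fun n => inner (x n) (vsub z1 z2))); auto. }
  have h3 : vsub z1 z2 = vzero by apply inner_def; rewrite inner_subl; lra.
  replace z1 with (vadd (vsub z1 z2) z2) by vring. rewrite h3. vring.
Qed.

Lemma opial (S : V -> Prop) (x : nat -> V) :
  (exists z, S z) ->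
  (forall z, S z -> exists L, Un_cv (fun n => norm (vsub (x n) z)) L) ->
  (forall phi xb, sincr phi -> weak_cv (fun k => x (phi k)) xb -> S xb) ->
  exists xb, S xb /\ weak_cv x xb.
Proof.
  intros [z0 hz0] hdist hclus.
  have [M hM] : exists M, forall n, norm (x n) <= M.
  { destruct (hdist z0 hz0) as [L hL]. destruct (cv_bounded _ _ hL) as [M hM].
    exists (M + norm z0). intro n. replace (x n) with (vadd (vsub (x n) z0) z0) by vring.
    eapply Rle_trans; [apply norm_triangle|]. have := hM n. lra. }
  destruct (weak_compact x M hM) as [phi0 [hphi0 [xb hxb]]].
  have hSxb := hclus _ _ hphi0 hxb.
  exists xb. split; auto. intro w. apply cv_of_subsubseq. intros th hth.
  destruct (weak_compact (fun k => x (th k)) M (fun k => hM (th k))) as [phi [hphi [xc hxc]]].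
  have hcomp := sincr_comp _ _ hth hphi.
  have hSxc := hclus _ _ hcomp hxc.
  destruct (hdist xc hSxc) as [Lc hLc]. destruct (hdist xb hSxb) as [Lb hLb].
  have e : xc = xb by apply (opial_unique x _ _ _ _ _ _ hcomp hphi0 hLc hLb hxc hxb).
  exists phi. split; auto. rewrite -e. apply hxc.
Qed.
End Opial.

Definition monoB {V : HSpace} (B : V -> V) : Prop :=
  forall x y, 0 <= inner (vsub x y) (vsub (B x) (B y)).
Definition lipB {V : HSpace} (B : V -> V) (chi : R) : Prop :=
  forall x y, norm (vsub (B x) (B y)) <= chi * norm (vsub x y).

Lemma demiclosed {V : HSpace} (f : V -> ERbar) (B : V -> V) chi (r u : nat -> V) xb Mr :
  Gamma0 f -> monoB B -> lipB B chi ->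
  (forall k, exists s, f (r k) = Fin s) -> (forall k, subdiff f (r k) (u k)) ->
  (forall k, norm (r k) <= Mr) -> weak_cv r xb ->
  Un_cv (fun k => norm (vadd (u k) (B (r k)))) 0 ->
  subdiff f xb (vopp (B xb)).
Proof.
  intros [hprop [hlsc hconv]] hmono hlip hfin hsub hbnd hw hres.
  set (v := fun k => vadd (u k) (B (r k))).
  (* subgradient inequality at r_k plus monotonicity of B *)
  have hkey : forall w s k, f w = Fin s ->
      ERle (f (r k)) (Fin (s - inner (vsub w (r k)) (v k) + inner (vsub w (r k)) (B w))).
  { intros w s k hws. destruct (hfin k) as [sr hsr]. rewrite hsr. ersimpl.
    have h1 := subdiff_ineq f (r k) (u k) w sr s (hsub k) hsr hws.
    have h2 := hmono (r k) w.
    have e1 : inner (vsub w (r k)) (u k) = inner (vsub w (r k)) (v k) - inner (vsub w (r k)) (B (r k))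
      by unfold v; vsimpl; ring.
    have e2 : inner (vsub (r k) w) (vsub (B (r k)) (B w))
              = - inner (vsub w (r k)) (B (r k)) + inner (vsub w (r k)) (B w) by vsimpl; ring.
    lra. }
  have hlim : forall w s, f w = Fin s -> ERle (f xb) (Fin (s + inner (vsub w xb) (B w))).
  { intros w s hws.
    apply (weak_lsc f r xb (fun k => s - inner (vsub w (r k)) (v k) + inner (vsub w (r k)) (B w)));
      [exact hlsc | exact hconv | exact hw | intro k; exact (hkey w s k hws) |].
    replace (s + inner (vsub w xb) (B w)) with (s - 0 + inner (vsub w xb) (B w)) by ring.
    apply CV_plus; [apply CV_minus; [apply cv_const|]|].
    - apply (inner_bounded_0 (fun k => vsub w (r k)) v (norm w + Mr)); auto.
      intro k. eapply Rle_trans; [apply norm_sub_le|]. have := hbnd k. lra.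
    - apply (cv_ext (fun k => inner w (B w) - inner (r k) (B w))); [intro; vsimpl; ring|].
      rewrite inner_subl. apply CV_minus; [apply cv_const | apply hw]. }
  destruct (proper_fin f hprop) as [w0 [s0 hw0]].
  have hfx := hlim w0 s0 hw0. destruct (f xb) as [fx|] eqn:Efx; ersimpl in hfx; [|contradiction].
  apply (minty f B chi xb fx); auto.
  intros w s hws. have := hlim w s hws. ersimpl.
  have : inner (vsub xb w) (B w) = - inner (vsub w xb) (B w) by vsimpl; ring.
  lra.
Qed.

(** * One step of Tseng's forward-backward-forward method *)

Lemma fbf_descent {V : HSpace} (A D G U a : V) gam chi eps :
  0 < gam -> 0 <= chi -> 0 <= eps <= 1 -> gam * chi <= 1 - eps ->
  0 <= inner A U -> norm G <= chi * norm D -> D = vscal gam (vadd (vadd U G) a) ->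
  norm (vadd A (vscal gam G)) ^ 2 + eps * norm D ^ 2 <= norm (vadd D A) ^ 2 + 2 * gam * norm A * norm a.
Proof.
  intros hg hchi heps hgc hAU hG hD.
  have nA := norm_nonneg A. have nD := norm_nonneg D. have nG := norm_nonneg G.
  rewrite !norm_sq_add norm_scal inner_scalr Rabs_right; [|lra].
  have hDA : inner D A = gam * (inner A U + inner A G + inner A a).
  { rewrite {1}hD inner_scall !inner_addl (inner_sym U) (inner_sym G) (inner_sym a). auto. }
  have hGG : norm G ^ 2 <= chi ^ 2 * norm D ^ 2 by rewrite -Rpow_mult_distr; apply pow_incr; lra.
  have hgc2 : gam ^ 2 * chi ^ 2 <= 1 - eps.
  { have hgc0 : 0 <= gam * chi by apply Rmult_le_pos; lra.
    rewrite -Rpow_mult_distr. have : (gam * chi) ^ 2 <= (1 - eps) ^ 2 by apply pow_incr; lra. nra. }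
  have h1 : gam ^ 2 * norm G ^ 2 <= gam ^ 2 * (chi ^ 2 * norm D ^ 2) by apply Rmult_le_compat_l; nra.
  have h2 : gam ^ 2 * chi ^ 2 * norm D ^ 2 <= (1 - eps) * norm D ^ 2 by apply Rmult_le_compat_r; nra.
  have h3 : 0 <= gam * inner A U by apply Rmult_le_pos; lra.
  have h4 := inner_ge A a.
  have h5 : gam * (- (norm A * norm a)) <= gam * inner A a by apply Rmult_le_compat_l; lra.
  rewrite hDA. lra.
Qed.

Lemma step_size_bounds chi eps gam :
  0 < chi -> 0 < eps < 1 / (chi + 1) -> eps <= gam <= (1 - eps) / chi ->
  0 < gam /\ eps < 1 /\ gam * chi <= 1 - eps /\ 2 * gam <= 2 / chi + 2.
Proof.
  intros hchi heps hgam.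
  have hgc : gam * chi <= 1 - eps.
  { apply Rmult_le_reg_r with (/ chi); [apply Rinv_0_lt_compat; lra|].
    replace (gam * chi * / chi) with gam by (field; lra). apply hgam. }
  have he1 : eps < 1.
  { have : eps * (chi + 1) < 1; [|nra].
    apply Rmult_lt_reg_r with (/ (chi + 1)); [apply Rinv_0_lt_compat; lra|].
    replace (eps * (chi + 1) * / (chi + 1)) with eps by (field; lra). lra. }
  have : gam <= 1 / chi.
  { apply Rmult_le_reg_r with chi; [lra|]. replace (1 / chi * chi) with 1 by (field; lra). lra. }
  unfold Rdiv in *. repeat split; lra.
Qed.

Section TsengStep.
Context {V : HSpace}.
Variables (f : V -> ERbar) (B : V -> V) (chi eps gam : R) (w a b c p z : V).
Hypotheses (hprop : proper f) (hconv : convex f) (hmono : monoB B) (hlip : lipB B chi)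
  (hchi : 0 < chi) (heps : 0 < eps < 1 / (chi + 1)) (hgam : eps <= gam <= (1 - eps) / chi)
  (hz : subdiff f z (vopp (B z)))
  (hprox : is_prox (fun v => ERscal gam (f v)) (vsub w (vscal gam (vadd (B w) a))) (vsub p b)).

(* forward step, inexact backward step, exact forward correction, and the
   total size of the errors *)
Let y : V := vsub w (vscal gam (vadd (B w) a)).
Let r : V := vsub p b.
Definition fbf_exact : V := vadd r (vscal gam (vsub (B w) (B r))).
Definition fbf_error : R := (2 / chi + 2) * (norm a + norm b + norm c).

Lemma fbf_error_ge : 2 * gam * norm a <= fbf_error /\ gam * norm a <= fbf_error.
Proof.
  have [hg [_ [_ hgK]]] := step_size_bounds chi eps gam hchi heps hgam.
  have := norm_nonneg a. have := norm_nonneg b. have := norm_nonneg c.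
  unfold fbf_error. split; nra.
Qed.

Lemma fbf_prox : (exists s, f r = Fin s) /\ subdiff f r (vscal (/ gam) (vsub y r)).
Proof.
  have [hg _] := step_size_bounds chi eps gam hchi heps hgam.
  exact (prox_subdiff f gam y r hg hprop hconv hprox).
Qed.

(* z is a fixed point of the backward step, so ||r - z|| <= ||y - (z - gam B z)||. *)
Lemma fbf_dist : norm (vsub r z) <= 2 * norm (vsub w z) + gam * norm a.
Proof.
  have [hg [he1 [hgc _]]] := step_size_bounds chi eps gam hchi heps hgam.
  have [[s hs] hu] := fbf_prox.
  destruct (subdiff_fin f z _ r s hz hs) as [sz hsz].
  set (yz := vsub z (vscal gam (B z))).
  have hz' : subdiff f z (vscal (/ gam) (vsub yz z)).
  { replace (vscal (/ gam) (vsub yz z)) with (vopp (B z)); auto.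
    apply vext. intro t. unfold yz. vsimpl. field. lra. }
  have hrz := prox_nonexp f gam y r yz z s sz hg hu hz' hs hsz.
  replace (vsub y yz) with (vsub (vsub (vsub w z) (vscal gam (vsub (B w) (B z)))) (vscal gam a))
    in hrz by (unfold y, yz; vring).
  have t1 := norm_sub_le (vsub (vsub w z) (vscal gam (vsub (B w) (B z)))) (vscal gam a).
  have t2 := norm_sub_le (vsub w z) (vscal gam (vsub (B w) (B z))).
  rewrite !norm_scal !Rabs_right in t1 t2; try lra.
  have hl := hlip w z. have := norm_nonneg (vsub w z).
  have : gam * norm (vsub (B w) (B z)) <= gam * (chi * norm (vsub w z)) by apply Rmult_le_compat_l; lra.
  nra.
Qed.

Lemma fbf_energy :
  norm (vsub fbf_exact z) ^ 2 + eps * norm (vsub w r) ^ 2 <= (norm (vsub w z) + fbf_error) ^ 2.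
Proof.
  have [hg [he1 [hgc _]]] := step_size_bounds chi eps gam hchi heps hgam.
  have [[s hs] hu] := fbf_prox.
  destruct (subdiff_fin f z _ r s hz hs) as [sz hsz].
  set (u := vscal (/ gam) (vsub y r)) in hu.
  have hAU : 0 <= inner (vsub r z) (vadd u (B r)).
  { replace (vadd u (B r)) with (vadd (vsub u (vopp (B z))) (vsub (B r) (B z))) by vring.
    rewrite inner_addr. have := subdiff_mono f r u z (vopp (B z)) s sz hu hz hs hsz.
    have := hmono r z. lra. }
  have hD : vsub w r = vscal gam (vadd (vadd (vadd u (B r)) (vsub (B w) (B r))) a).
  { apply vext. intro t. unfold u, y. vsimpl. field. lra. }
  have hdesc := fbf_descent (vsub r z) (vsub w r) (vsub (B w) (B r)) (vadd u (B r)) a gam chi eps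
                  hg (Rlt_le _ _ hchi) ltac:(lra) hgc hAU (hlip w r) hD.
  replace (vadd (vsub r z) (vscal gam (vsub (B w) (B r)))) with (vsub fbf_exact z) in hdesc
    by (unfold fbf_exact; vring).
  replace (vadd (vsub w r) (vsub r z)) with (vsub w z) in hdesc by vring.
  have hA := fbf_dist. have [hEa _] := fbf_error_ge.
  have nA := norm_nonneg (vsub r z). have nw := norm_nonneg (vsub w z). have na := norm_nonneg a.
  have : 2 * gam * norm (vsub r z) * norm a <= 2 * gam * norm a * (2 * norm (vsub w z) + gam * norm a).
  { have : 0 <= 2 * gam * norm a by nra. nra. }
  have : 2 * gam * norm a * norm (vsub w z) <= fbf_error * norm (vsub w z) by apply Rmult_le_compat_r; lra.
  have : (2 * gam * norm a) ^ 2 <= fbf_error ^ 2 by apply pow_incr; nra.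
  nra.
Qed.

Lemma fbf_perturbation :
  norm (vsub (vadd (vsub w y) (vsub p (vscal gam (vadd (B p) c)))) fbf_exact) <= fbf_error.
Proof.
  have [hg [he1 [hgc hgK]]] := step_size_bounds chi eps gam hchi heps hgam.
  replace (vsub (vadd (vsub w y) (vsub p (vscal gam (vadd (B p) c)))) fbf_exact)
    with (vadd (vadd (vscal gam a) (vscal gam (vopp c))) (vadd b (vscal gam (vsub (B r) (B p)))))
    by (unfold fbf_exact, y, r; vring).
  have hrp : norm (vsub r p) = norm b by apply norm_eq_inner; unfold r; vsimpl; ring.
  have hl := hlip r p. rewrite hrp in hl.
  eapply Rle_trans; [apply norm_triangle|].
  eapply Rle_trans; [apply Rplus_le_compat; apply norm_triangle|].
  rewrite !norm_scal norm_opp !Rabs_right; try lra.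
  have na := norm_nonneg a. have nb := norm_nonneg b. have nc := norm_nonneg c.
  have : gam * norm (vsub (B r) (B p)) <= gam * (chi * norm b) by apply Rmult_le_compat_l; lra.
  have : 0 < 2 / chi by apply Rdiv_lt_0_compat; lra.
  unfold fbf_error. nra.
Qed.
End TsengStep.

(** * Weak convergence of Tseng's method with summable errors *)

Section Tseng.
Context {V : HSpace}.
Variables (f : V -> ERbar) (B : V -> V) (chi eps : R) (gamma : nat -> R) (a b c x p : nat -> V).
Hypotheses (hf : Gamma0 f) (hmono : monoB B) (hlip : lipB B chi)
  (hzero : exists z, subdiff f z (vopp (B z)))
  (hchi : 0 < chi) (heps : 0 < eps < 1 / (chi + 1))
  (hgam : forall n, eps <= gamma n <= (1 - eps) / chi)
  (ha : abs_summable a) (hb : abs_summable b) (hc : abs_summable c)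
  (hrec : forall n,
     is_prox (fun z => ERscal (gamma n) (f z))
             (vsub (x n) (vscal (gamma n) (vadd (B (x n)) (a n)))) (vsub (p n) (b n)) /\
     x (S n) = vadd (vsub (x n) (vsub (x n) (vscal (gamma n) (vadd (B (x n)) (a n)))))
                    (vsub (p n) (vscal (gamma n) (vadd (B (p n)) (c n))))).

Definition tseng_zero (z : V) : Prop := subdiff f z (vopp (B z)).

Let r (n : nat) : V := vsub (p n) (b n).
Let En (n : nat) : R := fbf_error chi (a n) (b n) (c n).

Lemma tseng_errors : (forall n, 0 <= En n) /\ bounded_sums En.
Proof.
  have h2 : 0 < 2 / chi by apply Rdiv_lt_0_compat; lra.
  have hK : 0 <= 2 / chi + 2 by lra.
  split.
  - intro n. unfold En, fbf_error. have := norm_nonneg (a n). have := norm_nonneg (b n).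
    have := norm_nonneg (c n). intros. apply Rmult_le_pos; lra.
  - apply bounded_sums_comb; auto; apply abs_summable_sums; auto.
Qed.

Lemma tseng_step n z : tseng_zero z ->
  norm (vsub (fbf_exact B (gamma n) (x n) (b n) (p n)) z) ^ 2 + eps * norm (vsub (x n) (r n)) ^ 2
    <= (norm (vsub (x n) z) + En n) ^ 2
  /\ norm (vsub (x (S n)) (fbf_exact B (gamma n) (x n) (b n) (p n))) <= En n
  /\ norm (vsub (r n) z) <= 2 * norm (vsub (x n) z) + En n.
Proof.
  intro hz. have [hprop [_ hconv]] := hf. destruct (hrec n) as [hprox hx].
  have hA := fbf_dist f B chi eps (gamma n) (x n) (a n) (b n) (p n) z hprop hconv hlip hchi heps
               (hgam n) hz hprox.
  have [_ hEa] := fbf_error_ge chi eps (gamma n) (a n) (b n) (c n) hchi heps (hgam n).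
  split; [|split].
  - exact (fbf_energy f B chi eps (gamma n) (x n) (a n) (b n) (c n) (p n) z hprop hconv hmono hlip
             hchi heps (hgam n) hz hprox).
  - rewrite hx. exact (fbf_perturbation B chi eps (gamma n) (x n) (a n) (b n) (c n) (p n) hlip hchi
                         heps (hgam n)).
  - unfold En, r. lra.
Qed.

Lemma tseng_fejer z n : tseng_zero z -> norm (vsub (x (S n)) z) <= norm (vsub (x n) z) + 2 * En n.
Proof.
  intro hz. have [h1 [h2 _]] := tseng_step n z hz.
  have hE := proj1 tseng_errors n. have nz := norm_nonneg (vsub (x n) z).
  have hxh : norm (vsub (fbf_exact B (gamma n) (x n) (b n) (p n)) z) <= norm (vsub (x n) z) + En n.
  { apply sq_le_le; [lra|].
    have : 0 <= eps * norm (vsub (x n) (r n)) ^ 2 by apply Rmult_le_pos; [lra | apply pow2_ge_0].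
    lra. }
  have := norm_sub_tri (x (S n)) (fbf_exact B (gamma n) (x n) (b n) (p n)) z. lra.
Qed.

Lemma tseng_dist_cv z : tseng_zero z -> exists L, Un_cv (fun n => norm (vsub (x n) z)) L.
Proof.
  intro hz. have [hE0 hEs] := tseng_errors.
  apply (quasi_fejer_cv _ (fun k => 2 * En k)).
  - intro n. have := hE0 n. lra.
  - destruct hEs as [M hM]. exists (2 * M). intro n.
    rewrite psum_scal.
    have := hM n. lra.
  - intro n. apply norm_nonneg.
  - intro n. apply tseng_fejer. exact hz.
Qed.

Lemma tseng_bounded z : tseng_zero z -> exists M, forall n, norm (r n) <= M.
Proof.
  intro hz. have [hE0 [Me hMe]] := tseng_errors.
  have hxb : forall n, norm (vsub (x n) z) <= norm (vsub (x O) z) + 2 * Me.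
  { intro n. have := quasi_fejer_bound (fun n => norm (vsub (x n) z)) (fun k => 2 * En k)
                       (fun k => tseng_fejer z k hz) n.
    rewrite psum_scal.
    have := hMe n. lra. }
  exists (2 * (norm (vsub (x O) z) + 2 * Me) + Me + norm z). intro n.
  have [_ [_ h3]] := tseng_step n z hz.
  have hEn : En n <= Me by have := term_le_psum En n hE0; have := hMe (S n); lra.
  replace (r n) with (vadd (vsub (r n) z) z) by vring.
  eapply Rle_trans; [apply norm_triangle|]. have := hxb n. lra.
Qed.

Lemma tseng_shadow : Un_cv (fun n => norm (vsub (x n) (r n))) 0.
Proof.
  destruct hzero as [z hz]. destruct (tseng_dist_cv z hz) as [L hL].
  have [hE0 hEs] := tseng_errors. have hEcv := summable_to0 En hE0 hEs.
  set (xh := fun n => fbf_exact B (gamma n) (x n) (b n) (p n)).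
  have hxh : Un_cv (fun n => norm (vsub (xh n) z)) L.
  { apply (cv_squeeze (fun n => norm (vsub (x (S n)) z) - En n) _
                      (fun n => norm (vsub (x (S n)) z) + En n)).
    - intro n. have [_ [h2 _]] := tseng_step n z hz.
      have := norm_sub_tri (x (S n)) (xh n) z. have := norm_sub_tri (xh n) (x (S n)) z.
      rewrite (norm_sub_sym (xh n) (x (S n))). unfold xh in *. lra.
    - replace L with (L - 0) by ring. apply CV_minus; auto. apply (cv_shift (fun n => norm (vsub (x n) z))); auto.
    - replace L with (L + 0) by ring. apply CV_plus; auto. apply (cv_shift (fun n => norm (vsub (x n) z))); auto. }
  apply sq_to0; [intro; apply norm_nonneg|].
  apply (cv_squeeze0 _ (fun n => / eps * ((norm (vsub (x n) z) + En n) ^ 2 - norm (vsub (xh n) z) ^ 2))).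
  - intro n. split; [apply pow2_ge_0|]. have [h1 _] := tseng_step n z hz.
    apply Rmult_le_reg_l with eps; [lra|]. rewrite -Rmult_assoc Rinv_r; [unfold xh in *; lra | lra].
  - replace 0 with (/ eps * (L ^ 2 - L ^ 2)) by ring. apply cv_scal.
    apply CV_minus; apply cv_pow2; auto.
    replace L with (L + 0) by ring. apply CV_plus; auto.
Qed.

(* The subgradient of f at r_n given by the proximal step. *)
Let u (n : nat) : V := vscal (/ gamma n) (vsub (vsub (x n) (vscal (gamma n) (vadd (B (x n)) (a n)))) (r n)).

Lemma tseng_residual :
  (forall n, (exists s, f (r n) = Fin s) /\ subdiff f (r n) (u n)) /\
  Un_cv (fun n => norm (vadd (u n) (B (r n)))) 0.
Proof.
  have [hprop [_ hconv]] := hf. split.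
  { intro n. destruct (hrec n) as [hprox _]. apply prox_subdiff; auto. have := hgam n. lra. }
  have hacv : Un_cv (fun n => norm (a n)) 0.
  { destruct (abs_summable_sums a ha) as [M hM].
    apply summable_to0; [intro; apply norm_nonneg | exists M; auto]. }
  apply (cv_squeeze0 _ (fun n => (/ eps + chi) * norm (vsub (x n) (r n)) + norm (a n))).
  - intro n. split; [apply norm_nonneg|].
    have hg := hgam n.
    replace (vadd (u n) (B (r n)))
      with (vsub (vsub (vscal (/ gamma n) (vsub (x n) (r n))) (vsub (B (x n)) (B (r n)))) (a n))
      by (apply vext; intro t; unfold u; vsimpl; field; lra).
    eapply Rle_trans; [apply norm_sub_le|].
    eapply Rle_trans; [apply Rplus_le_compat_r; apply norm_sub_le|].
    rewrite norm_scal Rabs_right; [|apply Rle_ge, Rlt_le, Rinv_0_lt_compat; lra].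
    have hinv : / gamma n <= / eps by apply Rinv_le_contravar; lra.
    have : / gamma n * norm (vsub (x n) (r n)) <= / eps * norm (vsub (x n) (r n))
      by apply Rmult_le_compat_r; [apply norm_nonneg | lra].
    have := hlip (x n) (r n). lra.
  - replace 0 with ((/ eps + chi) * 0 + 0) by ring. apply CV_plus; auto.
    apply cv_scal. apply tseng_shadow.
Qed.

Lemma tseng_cluster phi xb : sincr phi -> weak_cv (fun k => x (phi k)) xb -> tseng_zero xb.
Proof.
  intros hphi hw. destruct hzero as [z hz]. destruct (tseng_bounded z hz) as [Mr hMr].
  destruct tseng_residual as [hsub hres].
  apply (demiclosed f B chi (fun k => r (phi k)) (fun k => u (phi k)) xb Mr hf hmono hlip).
  - intro k. apply (hsub (phi k)).
  - intro k. apply (hsub (phi k)).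
  - intro k. apply hMr.
  - apply (weak_close (fun k => x (phi k))); auto.
    apply (cv_subseq (fun n => norm (vsub (x n) (r n)))); auto. apply tseng_shadow.
  - apply (cv_subseq (fun n => norm (vadd (u n) (B (r n))))); auto.
Qed.

(* Tseng's method with summable errors: x_n and p_n converge weakly to a
   zero of df + B (Opial's lemma, then ||x_n - p_n|| -> 0). *)
Theorem tseng : exists xb, tseng_zero xb /\ weak_cv x xb /\ weak_cv p xb.
Proof.
  destruct (opial tseng_zero x hzero tseng_dist_cv tseng_cluster) as [xb [hz hwx]].
  exists xb. split; [|split]; auto.
  apply (weak_close x); auto.
  apply (cv_squeeze0 _ (fun n => norm (vsub (x n) (r n)) + norm (b n))).
  - intro n. split; [apply norm_nonneg|].
    replace (vsub (x n) (p n)) with (vsub (vsub (x n) (r n)) (b n)) by (unfold r; vring).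
    apply norm_sub_le.
  - replace 0 with (0 + 0) by ring. apply CV_plus; [apply tseng_shadow|].
    destruct (abs_summable_sums b hb) as [M hM].
    apply summable_to0; [intro; apply norm_nonneg | exists M; auto].
Qed.
End Tseng.

(** * The product space H_1 + ... + H_m *)

From HB Require Import structures.
From mathcomp Require Import ssrfun ssrbool eqtype ssrnat fintype bigop.

Lemma Rplus_assoc_law : associative Rplus. Proof. intros x y z. ring. Qed.
HB.instance Definition _ := Monoid.isComLaw.Build R 0%R Rplus Rplus_assoc_law Rplus_comm Rplus_0_l.

Section FiniteSums.
Context {m : nat}.
Implicit Types (F G : 'I_m -> R).

Lemma sumI_add F G : sumI (fun i => F i + G i) = sumI F + sumI G.
Proof. unfold sumI. rewrite big_split. reflexivity. Qed.

Lemma sumI_scal F a : sumI (fun i => a * F i) = a * sumI F.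
Proof. unfold sumI. apply (big_rec2 (fun y1 y2 => y1 = a * y2)); [ring|]. intros i y1 y2 _ ->. ring. Qed.

Lemma sumI_ext F G : (forall i, F i = G i) -> sumI F = sumI G.
Proof. intro h. unfold sumI. apply eq_bigr. auto. Qed.

Lemma sumI_le F G : (forall i, F i <= G i) -> sumI F <= sumI G.
Proof.
  intro h. unfold sumI. apply (big_rec2 (fun y1 y2 => y1 <= y2)); [lra|].
  intros i y1 y2 _ hy. have := h i. lra.
Qed.

Lemma sumI_nonneg F : (forall i, 0 <= F i) -> 0 <= sumI F.
Proof. intro h. have := sumI_le (fun _ => 0) F h. unfold sumI. rewrite big1 //. Qed.

Lemma sumI_single F i : (forall j, 0 <= F j) -> F i <= sumI F.
Proof.
  intro h. unfold sumI. rewrite (bigD1 i) //=.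
  rewrite -{1}(Rplus_0_r (F i)). apply Rplus_le_compat_l.
  apply (big_rec (fun y => 0 <= y)); [lra|]. intros j y _ hy. have := h j. simpl. lra.
Qed.

Lemma sumI_only F i : (forall j, j != i -> F j = 0) -> sumI F = F i.
Proof. intro h. unfold sumI. rewrite (bigD1 i) //= big1; [ring | auto]. Qed.

Lemma sumI_sq_le F : (forall j, 0 <= F j) -> sumI (fun i => F i ^ 2) <= sumI F ^ 2.
Proof.
  intro h. unfold sumI.
  have K : 0 <= \big[Rplus/0]_(i < m) F i /\ \big[Rplus/0]_(i < m) F i ^ 2 <= (\big[Rplus/0]_(i < m) F i) ^ 2.
  { apply (big_rec2 (fun y2 y1 => 0 <= y1 /\ y2 <= y1 ^ 2)); [lra|].
    intros i y1 y2 _ [h1 h2]. have := h i. split; nra. }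
  tauto.
Qed.

Lemma sumI_cv (u : 'I_m -> nat -> R) (l : 'I_m -> R) :
  (forall i, Un_cv (u i) (l i)) -> Un_cv (fun n => sumI (fun i => u i n)) (sumI l).
Proof.
  intro h.
  (* the pointwise sum of sequences is a big sum of functions *)
  set (fadd := fun (g1 g2 : nat -> R) n => g1 n + g2 n).
  have e : forall n, sumI (fun i => u i n) = (\big[fadd/(fun _ => 0)]_(i < m) u i) n.
  { intro n. unfold sumI. symmetry.
    apply (big_morph (fun g : nat -> R => g n)); [intros g1 g2; reflexivity | reflexivity]. }
  apply (cv_ext (fun n => (\big[fadd/(fun _ => 0)]_(i < m) u i) n)); [intro; rewrite e; auto|].
  unfold sumI. apply (big_rec2 (fun y1 y2 => Un_cv y2 y1)); [apply cv_const|].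
  intros i y1 y2 _ hy. unfold fadd. apply CV_plus; auto.
Qed.

Lemma sum_f_sumI (g : 'I_m -> nat -> R) N :
  sum_f_R0 (fun n => sumI (fun i => g i n)) N = sumI (fun i => sum_f_R0 (g i) N).
Proof. induction N as [|N IH]; simpl; [auto | rewrite IH -sumI_add; auto]. Qed.
End FiniteSums.

Section Product.
Context {m : nat}.
Variable H : 'I_m -> HSpace.

Lemma prod_norm_sq (x : prodH H) : norm x ^ 2 = sumI (fun i => norm (x i) ^ 2).
Proof.
  unfold norm at 1. rewrite pow2_sqrt.
  - apply sumI_ext. intro i. rewrite norm_sq. auto.
  - apply sumI_nonneg. intro; apply inner_pos.
Qed.

Lemma prod_comp_le (x : prodH H) i : norm (x i) <= norm x.
Proof.
  apply sq_le_le; [unfold norm; apply sqrt_pos|].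
  rewrite prod_norm_sq. apply (sumI_single (fun i => norm (x i) ^ 2)). intro; apply pow2_ge_0.
Qed.

(* Completeness of the product: componentwise limits of a Cauchy sequence. *)
Lemma prod_complete (u : nat -> prodH H) :
  (forall e, 0 < e -> exists N, forall p q, (N <= p)%N -> (N <= q)%N ->
        norm (vsub (u p) (u q)) < e) ->
  exists l : prodH H, Un_cv (fun n => norm (vsub (u n) l)) 0.
Proof.
  intro hu.
  have ex : forall i, exists l : H i, Un_cv (fun n => norm (vsub (u n i) l)) 0.
  { intro i. apply hs_complete. intros e he. destruct (hu e he) as [N hN]. exists N.
    intros p q hp hq. eapply Rle_lt_trans; [|apply (hN p q)].
    - apply (prod_comp_le (vsub (u p) (u q)) i).
    - apply/leP; auto.
    - apply/leP; auto. }
  have [l hl] : exists l : prodH H, forall i, Un_cv (fun n => norm (vsub (u n i) (l i))) 0.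
  { exists (fun i => proj1_sig (constructive_indefinite_description _ (ex i))). intro i.
    destruct (constructive_indefinite_description _ (ex i)) as [li hli]. exact hli. }
  exists l. apply sq_to0; [intro; unfold norm; apply sqrt_pos|].
  have hs := sumI_cv (fun i n => norm (vsub (u n i) (l i)) ^ 2) (fun _ => 0).
  have hzero : sumI (fun _ : 'I_m => 0) = 0 by unfold sumI; rewrite big1.
  rewrite hzero in hs.
  apply (cv_ext (fun n => sumI (fun i => norm (vsub (u n i) (l i)) ^ 2)));
    [intro n; rewrite prod_norm_sq; auto|].
  apply hs. intro i. replace 0 with (0 ^ 2) by ring. apply cv_pow2. auto.
Qed.

Lemma prod_ax : hilbert_axioms (prodH H).
Proof.
  repeat split.
  all: try (intros; apply functional_extensionality_dep; intro i; simpl; vring).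
  - intros x y. apply sumI_ext. intro; apply inner_sym.
  - intros x y z. rewrite -sumI_add. apply sumI_ext. intro; apply inner_addl.
  - intros a x y. rewrite -sumI_scal. apply sumI_ext. intro; apply inner_scall.
  - intros x. apply sumI_nonneg. intro; apply inner_pos.
  - intros x hx. apply functional_extensionality_dep. intro i. apply inner_def.
    have h := sumI_single (fun i => inner (x i) (x i)) i (fun j => inner_pos (x j)).
    have := inner_pos (x i). simpl in hx. lra.
  - apply prod_complete.
Qed.

Definition prodHS : HSpace := {| hs_raw := prodH H; hs_ax := prod_ax |}.

Lemma abs_summable_prod (a : nat -> prodH H) :
  (forall i, abs_summable (fun n => a n i)) -> abs_summable a.
Proof.
  intro h. have [M hM] : exists M : 'I_m -> R, forall i N, sum_f_R0 (fun n => norm (a n i)) N <= M i.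
  { exists (fun i => proj1_sig (constructive_indefinite_description _ (h i))). intros i N.
    destruct (constructive_indefinite_description _ (h i)) as [M hM]. auto. }
  exists (sumI M). intro N.
  eapply Rle_trans; [apply (sum_Rle _ (fun n => sumI (fun i => norm (a n i))))|].
  - intros n _. apply sq_le_le; [apply sumI_nonneg; intro; apply norm_nonneg|].
    rewrite prod_norm_sq. apply (sumI_sq_le (fun i => norm (a n i))). intro; apply norm_nonneg.
  - rewrite sum_f_sumI. apply sumI_le. intro i. apply hM.
Qed.

Lemma weak_comp (u : nat -> prodH H) (l : prodH H) i :
  weak_cv u l -> weak_cv (fun n => u n i) (l i).
Proof.
  intros hw z.
  set (Z := dfwith (fun j => (@vzero (H j))) z : prodH H).
  have hZ : forall w : prodH H, inner w Z = inner (w i) z.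
  { intro w. change (sumI (fun j => inner (w j) (Z j)) = inner (w i) z).
    rewrite (sumI_only _ i); [unfold Z; rewrite dfwith_in; auto|].
    intros j hj. unfold Z. rewrite dfwith_out; [apply inner_zeror | rewrite eq_sym; auto]. }
  apply (cv_ext (fun n => inner (u n) Z)); [intro; apply hZ|].
  rewrite -hZ. apply hw.
Qed.

Lemma dfwith_self (x : prodH H) i : dfwith (x : forall j, H j) (x i) = x.
Proof.
  apply functional_extensionality_dep. intro j.
  by case: (eqVneq i j) => [<-|ne]; [rewrite dfwith_in | rewrite dfwith_out].
Qed.
End Product.

Section MultiAgent.
Context {m : nat}.
Variables (H : 'I_m -> HSpace) (f : prodH H -> ERbar) (g : 'I_m -> prodH H -> ERbar)
  (grad : forall i : 'I_m, prodH H -> H i).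

Definition gradB (x : prodHS H) : prodHS H := fun i => grad i x.

Lemma gradB_mono :
  (forall x y : prodH H, 0 <= sumI (fun i => inner (vsub (grad i x) (grad i y)) (vsub (x i) (y i)))) ->
  monoB gradB.
Proof.
  intros hmono u v. change (0 <= sumI (fun i => inner (vsub (u i) (v i)) (vsub (grad i u) (grad i v)))).
  rewrite (sumI_ext _ (fun i => inner (vsub (grad i u) (grad i v)) (vsub (u i) (v i)))); [apply hmono|].
  intro; apply inner_sym.
Qed.

Lemma gradB_lip chi : 0 < chi ->
  (forall x y : prodH H, sumI (fun i => norm (vsub (grad i x) (grad i y)) ^ 2)
                         <= chi ^ 2 * sumI (fun i => norm (vsub (x i) (y i)) ^ 2)) ->
  lipB gradB chi.
Proof.
  intros hchi hlip u v. apply sq_le_le; [apply Rmult_le_pos; [lra | apply norm_nonneg]|].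
  rewrite Rpow_mult_distr !prod_norm_sq. exact (hlip u v).
Qed.

(* A zero of df + gradB solves (P): for each i, the subgradient inequality of
   f in the direction of the i-th block and the gradient inequality of the
   convex partial map of g_i add up to minimality of f + g_i in x_i. *)
Lemma zero_solves_P (xb : prodHS H) :
  (forall i (x : prodH H),
      convex (fun v : H i => g i (dfwith (x : forall j, H j) v)) /\
      has_gradient (fun v : H i => g i (dfwith (x : forall j, H j) v)) (x i) (grad i x)) ->
  subdiff f xb (vopp (gradB xb)) -> solves_P f g xb.
Proof.
  intros hg hsub i v. cbv beta. rewrite !dfwith_self.
  destruct (hg i xb) as [hcv hgr].
  have hgi := grad_ineq _ (xb i) (grad i xb) hcv hgr v. rewrite dfwith_self in hgi.
  have hfi := hsub (dfwith (xb : forall j, H j) v).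
  have ein : inner (vsub (dfwith (xb : forall j, H j) v : prodHS H) xb) (vopp (gradB xb))
             = - inner (vsub v (xb i)) (grad i xb).
  { change (sumI (fun j => inner (vsub (dfwith (xb : forall j, H j) v j) (xb j)) (vopp (grad j xb)))
            = - inner (vsub v (xb i)) (grad i xb)).
    rewrite (sumI_only _ i); [rewrite dfwith_in inner_oppr; auto|].
    intros j hj. rewrite dfwith_out; [vsimpl; ring | rewrite eq_sym; auto]. }
  rewrite ein in hfi.
  destruct (f xb) as [fx|]; destruct (g i xb) as [gx|];
    destruct (f (dfwith (xb : forall j, H j) v)) as [fy|];
    destruct (g i (dfwith (xb : forall j, H j) v)) as [gy|]; ersimpl in *; auto; lra.
Qed.
End MultiAgent.

Theorem theorem3p3
  (m : nat) (Hm : (2 <= m)%nat) (H : 'I_m -> HSpace)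
  (f : prodH H -> ERbar) (hf : Gamma0 f)
  (g : 'I_m -> prodH H -> ERbar)
  (grad : forall i : 'I_m, prodH H -> H i)
  (hg : forall (i : 'I_m) (x : prodH H),
      convex (fun v : H i => g i (dfwith (x : forall j, H j) v)) /\
      has_gradient (fun v : H i => g i (dfwith (x : forall j, H j) v)) (x i) (grad i x))
  (hmono : forall x y : prodH H,
      0 <= sumI (fun i => inner (vsub (grad i x) (grad i y)) (vsub (x i) (y i))))
  (hz : exists z : prodH H, subdiff f z (fun i => vopp (grad i z)))
  (chi : R) (hchi : 0 < chi)
  (hlip : forall x y : prodH H,
      sumI (fun i => (norm (vsub (grad i x) (grad i y))) ^ 2)
      <= chi ^ 2 * sumI (fun i => (norm (vsub (x i) (y i))) ^ 2))
  (eps : R) (heps : 0 < eps < 1 / (chi + 1))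
  (gamma : nat -> R) (hgamma : forall n, eps <= gamma n <= (1 - eps) / chi)
  (x0 : prodH H)
  (a b c : nat -> prodH H)
  (habs : forall i : 'I_m,
      abs_summable (fun n => a n i) /\ abs_summable (fun n => b n i) /\
      abs_summable (fun n => c n i))
  (x p : nat -> prodH H)
  (hx0 : x O = x0)
  (hrec : forall n : nat,
      let y : prodH H :=
        fun i => vsub (x n i) (vscal (gamma n) (vadd (grad i (x n)) (a n i))) in
      let q : prodH H :=
        fun i => vsub (p n i) (vscal (gamma n) (vadd (grad i (p n)) (c n i))) in
      is_prox (fun z : prodH H => ERscal (gamma n) (f z)) y
              (fun i => vsub (p n i) (b n i))
      /\ x (S n) = (fun i => vadd (vsub (x n i) (y i)) (q i))) :
  exists xb : prodH H,
    solves_P f g xb /\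
    forall i : 'I_m,
      weak_cv (fun n => x n i) (xb i) /\ weak_cv (fun n => p n i) (xb i).
Proof.
  (* Tseng's method on the product space for df + gradB *)
  have ha : abs_summable (V := prodHS H) a by apply abs_summable_prod; intro i; apply habs.
  have hb : abs_summable (V := prodHS H) b by apply abs_summable_prod; intro i; apply habs.
  have hc : abs_summable (V := prodHS H) c by apply abs_summable_prod; intro i; apply habs.
  destruct (@tseng (prodHS H) f (gradB H grad) chi eps gamma a b c x p hf (gradB_mono H grad hmono)
              (gradB_lip H grad chi hchi hlip) hz hchi heps hgamma ha hb hc (fun n => hrec n))
    as [xb [hzero [hwx hwp]]].
  exists xb. split; [exact (zero_solves_P H f g grad xb hg hzero)|].
  intro i. split; apply weak_comp; auto.
Qed.
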